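(* Let $X,Y$ be jointly Gaussian centred random variables with common variance $\sigma^2$ and correlation $c$, and let $r>0$. Then as $c\to-1$ (with $\sigma$ fixed), $$\operatorname{E}\big((X^+Y^+)^r\big)\simeq K_r\,\sigma^{-2(1+r)}\big(\det\operatorname{Var}(X,Y)\big)^{(2r+1)/2},\qquad K_r:=\frac1{2\pi}\int_0^\infty\!\!\int_0^\infty x^ry^r\exp\Big(-\frac{(x+y)^2}{2}\Big)dx\,dy<\infty,$$ and $K_1=\frac1{6\pi}$. Moreover, as $c\to-1$, $\operatorname{E}(X^+Y^-)\simeq\frac{\sigma^2}{2}$.
   Context: $z^+=\max(0,z)$, $z^-=-\min(0,z)$. *)

From Stdlib Require Import Reals Lra.
Open Scope R_scope.

Definition posp (z : R) : R := Rmax 0 z.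
Definition negp (z : R) : R := - Rmin 0 z.

(* real power x^r for x >= 0, with the convention 0^r = 0 (r > 0) *)
Definition rpow (x r : R) : R := if Rle_dec x 0 then 0 else Rpower x r.

Definition has_integral_0inf (f : R -> R) (l : R) : Prop :=
  (forall b, 0 <= b -> inhabited (Riemann_integrable f 0 b)) /\
  (forall eps, eps > 0 -> exists B, forall b (pr : Riemann_integrable f 0 b),
      b >= B -> Rabs (RiemannInt pr - l) < eps).

Definition has_integral_R (f : R -> R) (l : R) : Prop :=
  exists l1 l2, has_integral_0inf f l1 /\ has_integral_0inf (fun x => f (- x)) l2
                /\ l = l1 + l2.

Definition has_integral2_R (F : R -> R -> R) (l : R) : Prop :=
  exists g : R -> R, (forall x, has_integral_R (fun y => F x y) (g x)) /\ has_integral_R g l.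

Definition has_integral2_0inf (F : R -> R -> R) (l : R) : Prop :=
  exists g : R -> R, (forall x, 0 <= x -> has_integral_0inf (fun y => F x y) (g x))
                     /\ has_integral_0inf g l.

(* determinant of Var(X,Y) for common variance sigma^2 and correlation c *)
Definition detVar (sigma c : R) : R := sigma ^ 4 - (c * sigma ^ 2) ^ 2.

(* density of the centred Gaussian vector (X,Y) with Var X = Var Y = sigma^2,
   Cov(X,Y) = c sigma^2 (nondegenerate for -1 < c < 1) *)
Definition gauss_density (sigma c x y : R) : R :=
  / (2 * PI * sqrt (detVar sigma c)) *
  exp (- (sigma ^ 2 * x ^ 2 - 2 * c * sigma ^ 2 * x * y + sigma ^ 2 * y ^ 2)
         / (2 * detVar sigma c)).

Definition K_integrand (r x y : R) : R :=
  / (2 * PI) * (rpow x r * rpow y r * exp (- (x + y) ^ 2 / 2)).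

Definition corr_domain (c : R) : Prop := -1 < c < 1.

From Stdlib Require Import Reals Lra Psatz.
From Coquelicot Require Import Coquelicot.
Open Scope R_scope.

(* Substituting (x, y) = t (u, v) with t = sqrt(det Var) / sigma turns E((X^+ Y^+)^r) into
   sigma^(-2(1+r)) det^((2r+1)/2) J_r(c) / (2 pi), where
   J_r(c) = int_0^oo int_0^oo u^r v^r exp(-(u^2 - 2 c u v + v^2) / 2) du dv and J_r(-1) = 2 pi K_r > 0.
   Since |e^a - e^b| <= |a - b| e^(max a b), J_r(c) - J_r(-1) = O(1 + c), so the ratio tends to 1.
   For r = 1 the inner integral of J_1(-1) is a shifted Gaussian moment u phi(u) - u^2 T(u), with T
   the normal tail, and an explicit antiderivative gives J_1(-1) = 1/3.  Reflecting y, E(X^+ Y^-)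
   is sigma^2 d^(3/2) J_1(-c) / (2 pi) with d = 1 - c^2; completing the square gives
   J_1(c) - J_1(-c) = c pi / d^(3/2), which forces the limit sigma^2 / 2. *)

(* Coquelicot states these for arbitrary normed modules; [rewrite] and [apply]
   only match them on real-valued functions in the forms below. *)
Lemma RInt_scal_R (f : R -> R) a b k :
  ex_RInt f a b -> RInt (fun x => k * f x) a b = k * RInt f a b.
Proof. exact (RInt_scal f a b k). Qed.

Lemma RInt_plus_R (f g : R -> R) a b : ex_RInt f a b -> ex_RInt g a b ->
  RInt (fun x => f x + g x) a b = RInt f a b + RInt g a b.
Proof. exact (RInt_plus f g a b). Qed.

Lemma RInt_Chasles_R (f : R -> R) a b c : ex_RInt f a b -> ex_RInt f b c ->
  RInt f a b + RInt f b c = RInt f a c.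
Proof. exact (RInt_Chasles f a b c). Qed.

Lemma RInt_comp_lin_R (f : R -> R) u v a b : ex_RInt f (u * a + v) (u * b + v) ->
  RInt (fun y => u * f (u * y + v)) a b = RInt f (u * a + v) (u * b + v).
Proof. exact (RInt_comp_lin f u v a b). Qed.

Lemma ex_RInt_continuous_R (f : R -> R) a b :
  (forall z, Rmin a b <= z <= Rmax a b -> continuous f z) -> ex_RInt f a b.
Proof. exact (ex_RInt_continuous (V := R_CompleteNormedModule) f a b). Qed.

Lemma continuous_mult_R (f g : R -> R) x :
  continuous f x -> continuous g x -> continuous (fun y => f y * g y) x.
Proof. exact (continuous_mult (K := R_AbsRing) f g x). Qed.

Lemma continuous_minus_R (f g : R -> R) x :
  continuous f x -> continuous g x -> continuous (fun y => f y - g y) x.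
Proof. exact (continuous_minus (V := R_NormedModule) f g x). Qed.

Lemma ex_derive_continuous_R (f : R -> R) x : ex_derive f x -> continuous f x.
Proof. exact (ex_derive_continuous f x). Qed.

(* [ring] fails on equations stated at a Coquelicot carrier convertible to [R]. *)
Ltac toR := match goal with |- @eq _ ?a ?b => change (@eq R a b) end.

(* Rewrites every [exp a] whose argument is ring-equal to [t] into [exp t],
   so that [field] can treat the exponentials produced by [auto_derive] as one atom. *)
Ltac norm_exp t := repeat match goal with |- context [exp ?a] =>
  assert_fails (constr_eq a t); replace a with t by (unfold Rdiv; simpl; ring) end.

Lemma exp_le a b : a <= b -> exp a <= exp b.
Proof. intros [H|H]; [left; apply exp_increasing; auto | rewrite H; lra]. Qed.

Lemma exp_sub_bounds a b : b <= a -> 0 <= exp a - exp b <= (a - b) * exp a.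
Proof.
  intros Hab. split.
  - destruct (exp_le b a Hab); lra.
  - assert (H := exp_ineq1_le (b - a)).
    assert (E : exp b = exp a * exp (b - a)) by (rewrite <- exp_plus; f_equal; ring).
    rewrite E. assert (0 < exp a) by apply exp_pos. nra.
Qed.

Lemma Rabs_exp_sub_le a b : Rabs (exp a - exp b) <= Rabs (a - b) * exp (Rmax a b).
Proof.
  destruct (Rle_dec b a) as [H|H].
  - rewrite Rmax_left by auto. destruct (exp_sub_bounds a b H).
    rewrite !Rabs_right by lra. auto.
  - rewrite Rmax_right by lra. destruct (exp_sub_bounds b a) as [A B]; [lra|].
    rewrite Rabs_minus_sym, (Rabs_minus_sym a b), !Rabs_right by lra. auto.
Qed.

Lemma exp_lin_mul_gauss_le p k x : 0 < k ->
  exp (p * x) * exp (- (k * x ^ 2) / 2) <= exp ((p + 1) ^ 2 / (2 * k)) * exp (- x).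
Proof.
  intros Hk. rewrite <- !exp_plus. apply exp_le.
  assert (E : (p + 1) ^ 2 / (2 * k) + - x - (p * x + - (k * x ^ 2) / 2)
              = (k * x - (p + 1)) ^ 2 / (2 * k)) by (field; lra).
  assert (0 <= (k * x - (p + 1)) ^ 2 / (2 * k)).
  { apply Rmult_le_pos; [apply pow2_ge_0 | left; apply Rinv_0_lt_compat; lra]. }
  lra.
Qed.

Lemma is_lim_exp_opp_pinfty : is_lim (fun b => exp (- b)) p_infty 0.
Proof.
  apply is_lim_spec. intros eps. exists (- ln eps). intros x Hx.
  rewrite Rminus_0_r, Rabs_right by (left; apply exp_pos).
  rewrite <- (exp_ln eps (cond_pos eps)). apply exp_increasing. lra.
Qed.

(** * Improper integrals over [0, +oo) *)

Definition is_RInt_0inf (f : R -> R) (l : R) : Prop :=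
  (forall b, 0 <= b -> ex_RInt f 0 b) /\ is_lim (fun b => RInt f 0 b) p_infty l.

Definition RInt_0inf (f : R -> R) : R := real (Lim (fun b => RInt f 0 b) p_infty).

Lemma is_lim_pinfty_eps (F : R -> R) (l : R) :
  is_lim F p_infty l <->
  forall eps, 0 < eps -> exists M, forall x, M < x -> Rabs (F x - l) < eps.
Proof.
  split.
  - intros H eps Heps. apply is_lim_spec in H.
    destruct (H (mkposreal eps Heps)) as [M HM]. exists M. exact HM.
  - intros H. apply is_lim_spec. intros eps.
    destruct (H eps (cond_pos eps)) as [M HM]. exists M. exact HM.
Qed.

Lemma is_lim_comp_scal_pinfty (F : R -> R) (l a : R) :
  0 < a -> is_lim F p_infty l -> is_lim (fun b => F (a * b)) p_infty l.
Proof.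
  intros Ha H. rewrite is_lim_pinfty_eps in *. intros eps Heps.
  destruct (H eps Heps) as [M HM]. exists (M / a). intros x Hx. apply HM.
  apply Rmult_lt_compat_l with (r := a) in Hx; auto. field_simplify in Hx; lra.
Qed.

Lemma is_lim_comp_shift_pinfty (F : R -> R) (l m : R) :
  is_lim F p_infty l -> is_lim (fun b => F (b + m)) p_infty l.
Proof.
  intros H. rewrite is_lim_pinfty_eps in *. intros eps Heps.
  destruct (H eps Heps) as [M HM]. exists (M - m). intros x Hx. apply HM. lra.
Qed.

Lemma is_RInt_0inf_ext f g l :
  (forall x, 0 < x -> f x = g x) -> is_RInt_0inf f l -> is_RInt_0inf g l.
Proof.
  intros Hfg [H1 H2]. split.
  - intros b Hb. apply ex_RInt_ext with f; [|apply H1; auto].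
    intros x [h1 h2]. rewrite Rmin_left in h1 by auto. apply Hfg; lra.
  - apply is_lim_ext_loc with (fun b => RInt f 0 b); [|auto].
    exists 0. intros b Hb. apply RInt_ext. intros x [h1 h2].
    rewrite Rmin_left in h1 by lra. apply Hfg; lra.
Qed.

Lemma is_RInt_0inf_unique f l1 l2 : is_RInt_0inf f l1 -> is_RInt_0inf f l2 -> l1 = l2.
Proof.
  intros [_ H1] [_ H2]. apply is_lim_unique in H1. apply is_lim_unique in H2.
  rewrite H1 in H2. injection H2; auto.
Qed.

Lemma is_RInt_0inf_RInt_0inf f : (exists l, is_RInt_0inf f l) -> is_RInt_0inf f (RInt_0inf f).
Proof.
  intros [l [A B]]. unfold RInt_0inf. rewrite (is_lim_unique _ _ _ B). split; auto.
Qed.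

Lemma is_RInt_0inf_plus f g l1 l2 : is_RInt_0inf f l1 -> is_RInt_0inf g l2 ->
  is_RInt_0inf (fun x => f x + g x) (l1 + l2).
Proof.
  intros [A1 B1] [A2 B2]. split.
  - intros b Hb. apply (ex_RInt_plus f g); auto.
  - apply is_lim_ext_loc with (fun b => RInt f 0 b + RInt g 0 b).
    + exists 0. intros b Hb. symmetry. apply RInt_plus_R; auto with real.
    + apply is_lim_plus'; auto.
Qed.

Lemma is_RInt_0inf_scal f k l : is_RInt_0inf f l -> is_RInt_0inf (fun x => k * f x) (k * l).
Proof.
  intros [A B]. split.
  - intros b Hb. apply (ex_RInt_scal f); auto.
  - apply is_lim_ext_loc with (fun b => k * RInt f 0 b).
    + exists 0. intros b Hb. symmetry. apply RInt_scal_R; auto with real.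
    + apply (is_lim_scal_l _ k p_infty l). auto.
Qed.

Lemma is_RInt_0inf_minus f g l1 l2 : is_RInt_0inf f l1 -> is_RInt_0inf g l2 ->
  is_RInt_0inf (fun x => f x - g x) (l1 - l2).
Proof.
  intros H1 H2. apply is_RInt_0inf_ext with (fun x => f x + (-1) * g x); [intros; ring|].
  replace (l1 - l2) with (l1 + (-1) * l2) by ring.
  apply is_RInt_0inf_plus; auto. apply is_RInt_0inf_scal; auto.
Qed.

Lemma is_RInt_0inf_le f g l1 l2 : is_RInt_0inf f l1 -> is_RInt_0inf g l2 ->
  (forall x, 0 < x -> f x <= g x) -> l1 <= l2.
Proof.
  intros [A1 B1] [A2 B2] H.
  assert (Hr : Rbar_le l1 l2).
  { apply (is_lim_le_loc (fun b => RInt f 0 b) (fun b => RInt g 0 b) p_infty); auto.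
    exists 0. intros b Hb. apply RInt_le; [lra | apply A1; lra | apply A2; lra |].
    intros x [h1 h2]; apply H; lra. }
  exact Hr.
Qed.

Lemma is_RInt_0inf_Rabs_le f g l lg : is_RInt_0inf f l -> is_RInt_0inf g lg ->
  (forall x, 0 < x -> Rabs (f x) <= g x) -> Rabs l <= lg.
Proof.
  intros H1 H2 H. apply Rabs_le. split.
  - assert (-1 * l <= lg); [|lra].
    apply is_RInt_0inf_le with (fun x => -1 * f x) g; [apply is_RInt_0inf_scal; auto | auto |].
    intros x Hx. specialize (H x Hx). apply Rabs_le_between in H. lra.
  - apply is_RInt_0inf_le with f g; auto.
    intros x Hx. specialize (H x Hx). apply Rabs_le_between in H. lra.
Qed.

Lemma is_RInt_0inf_exp_opp : is_RInt_0inf (fun x => exp (- x)) 1.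
Proof.
  assert (HR : forall b, is_RInt (fun x => exp (- x)) 0 b (1 - exp (- b))).
  { intros b. replace (1 - exp (- b)) with (minus (- exp (- b)) (- exp (- 0))).
    2:{ unfold minus, plus, opp; simpl. rewrite Ropp_0, exp_0. ring. }
    apply (is_RInt_derive (fun x => - exp (- x))).
    - intros x _. auto_derive; auto. ring.
    - intros x _. apply ex_derive_continuous_R. auto_derive; auto. }
  split.
  - intros b _. eexists; apply HR.
  - apply is_lim_ext with (fun b => 1 - exp (- b)).
    { intros b. symmetry. apply is_RInt_unique, HR. }
    replace (Finite 1) with (Rbar_minus 1 0) by (simpl; f_equal; ring).
    apply is_lim_minus'; [apply is_lim_const | apply is_lim_exp_opp_pinfty].
Qed.

Lemma is_RInt_0inf_0 f : (forall x, 0 < x -> f x = 0) -> is_RInt_0inf f 0.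
Proof.
  intros H. apply is_RInt_0inf_ext with (fun x => 0 * exp (- x)).
  - intros x Hx. rewrite H; auto. ring.
  - assert (H0 := is_RInt_0inf_scal _ 0 _ is_RInt_0inf_exp_opp).
    rewrite Rmult_0_l in H0. exact H0.
Qed.

Lemma Rabs_RInt_le_dominated (f g : R -> R) u v : u <= v ->
  ex_RInt f u v -> ex_RInt g u v -> (forall x, u <= x <= v -> Rabs (f x) <= g x) ->
  Rabs (RInt f u v) <= RInt g u v.
Proof.
  intros Huv Ef Eg H.
  exact (norm_RInt_le (V := R_NormedModule) f g u v _ _ Huv H
           (RInt_correct _ _ _ Ef) (RInt_correct _ _ _ Eg)).
Qed.

(* Comparison test: the partial integrals of [f] are Cauchy because those of [g] are. *)
Lemma ex_is_RInt_0inf_dominated (f g : R -> R) lg :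
  (forall b, 0 <= b -> ex_RInt f 0 b) -> (forall x, 0 < x -> Rabs (f x) <= g x) ->
  is_RInt_0inf g lg -> exists l, is_RInt_0inf f l.
Proof.
  intros Hf Hfg [Ag Bg].
  assert (Hc : exists y, filterlim (fun b => RInt f 0 b) (Rbar_locally' p_infty) (locally y)).
  { apply (proj1 (filterlim_locally_cauchy (U := R_CompleteSpace)
                    (F := Rbar_locally' p_infty) (fun b => RInt f 0 b))).
    intros eps. rewrite is_lim_pinfty_eps in Bg.
    destruct (Bg (eps / 2)) as [M HM]; [destruct eps; simpl; lra|].
    exists (fun b => Rmax 0 M < b). split; [exists (Rmax 0 M); auto|].
    assert (Hincr : forall u v, Rmax 0 M < u -> u <= v ->
                     Rabs (RInt f 0 v - RInt f 0 u) < eps).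
    { intros u v Hu Huv.
      assert (H0u : 0 < u) by (generalize (Rmax_l 0 M); lra).
      assert (HMu : M < u) by (generalize (Rmax_r 0 M); lra).
      assert (Ef : ex_RInt f u v) by (apply (ex_RInt_Chasles_2 f 0); [lra | apply Hf; lra]).
      assert (Eg : ex_RInt g u v) by (apply (ex_RInt_Chasles_2 g 0); [lra | apply Ag; lra]).
      assert (Cf := RInt_Chasles_R f 0 u v (Hf u (Rlt_le _ _ H0u)) Ef).
      assert (Cg := RInt_Chasles_R g 0 u v (Ag u (Rlt_le _ _ H0u)) Eg).
      replace (RInt f 0 v - RInt f 0 u) with (RInt f u v) by lra.
      eapply Rle_lt_trans.
      { apply Rabs_RInt_le_dominated; [exact Huv | exact Ef | exact Eg |].
        intros x Hx. apply Hfg. lra. }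
      replace (RInt g u v) with (RInt g 0 v - RInt g 0 u) by lra.
      assert (A1 := HM u HMu). assert (A2 := HM v ltac:(lra)).
      apply Rabs_lt_between in A1. apply Rabs_lt_between in A2. lra. }
    intros u v Hu Hv. change (Rabs (RInt f 0 v - RInt f 0 u) < eps).
    destruct (Rle_dec u v) as [Huv|Huv].
    - apply Hincr; auto.
    - rewrite Rabs_minus_sym. apply Hincr; auto; lra. }
  destruct Hc as [y Hy]. exists y. split; auto.
Qed.

Lemma ex_is_RInt_0inf_exp_bound (f : R -> R) M : (forall y, 0 <= y -> continuous f y) ->
  (forall y, 0 < y -> Rabs (f y) <= M * exp (- y)) -> exists l, is_RInt_0inf f l.
Proof.
  intros Hc Hb.
  apply ex_is_RInt_0inf_dominated with (fun y => M * exp (- y)) (M * 1); auto.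
  - intros b Hb0. apply ex_RInt_continuous_R. intros z [h1 h2].
    rewrite Rmin_left in h1; auto.
  - apply is_RInt_0inf_scal, is_RInt_0inf_exp_opp.
Qed.

Lemma is_RInt_0inf_comp_scal (f : R -> R) l a : 0 < a ->
  is_RInt_0inf f l -> is_RInt_0inf (fun u => f (a * u)) (l / a).
Proof.
  intros Ha [A B].
  assert (HE : forall b, 0 <= b -> is_RInt (fun u => f (a * u)) 0 b (/ a * RInt f 0 (a * b))).
  { intros b Hb.
    assert (E0 : ex_RInt f (a * 0 + 0) (a * b + 0)).
    { rewrite Rmult_0_r, !Rplus_0_r. apply A. nra. }
    assert (I := is_RInt_scal _ 0 b (/ a) _ (is_RInt_comp_lin f a 0 0 b _ (RInt_correct _ _ _ E0))).
    rewrite Rmult_0_r, !Rplus_0_r in I.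
    eapply is_RInt_ext; [|exact I]. intros x _. unfold scal; simpl; unfold mult; simpl.
    rewrite Rplus_0_r. field. lra. }
  split.
  - intros b Hb. eexists. apply HE, Hb.
  - apply is_lim_ext_loc with (fun b => / a * RInt f 0 (a * b)).
    { exists 0. intros b Hb. symmetry. apply is_RInt_unique, HE. lra. }
    replace (l / a) with (/ a * l) by (field; lra).
    apply (is_lim_scal_l _ (/ a) p_infty l), is_lim_comp_scal_pinfty; auto.
Qed.

Lemma is_RInt_0inf_gt_0 f l : is_RInt_0inf f l -> (forall x, 0 < x -> 0 <= f x) ->
  (forall x, 0 <= x <= 1 -> continuous f x) -> (forall x, 0 < x < 1 -> 0 < f x) -> 0 < l.
Proof.
  intros [A B] Hnn Hc Hpos.
  assert (H01 : 0 < RInt f 0 1) by (apply RInt_gt_0; auto; lra).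
  assert (H : Rbar_le (RInt f 0 1) l).
  { apply (is_lim_le_loc (fun _ => RInt f 0 1) (fun b => RInt f 0 b) p_infty);
      [|apply is_lim_const|auto].
    exists 1. intros b Hb.
    assert (E1b : ex_RInt f 1 b) by (apply (ex_RInt_Chasles_2 f 0); [lra | apply A; lra]).
    rewrite <- (RInt_Chasles_R f 0 1 b); [|apply A; lra | auto].
    assert (0 <= RInt f 1 b) by (apply RInt_ge_0; auto; [lra | intros x Hx; apply Hnn; lra]).
    lra. }
  simpl in H. lra.
Qed.

(** * The Gaussian integral *)

Definition gauss (s : R) : R := exp (- (s * s)).
Definition gauss_int (t : R) : R := RInt gauss 0 t.
Definition atan_kernel (t x : R) : R := exp (- (t * t * (1 + x * x))) / (1 + x * x).
Definition atan_kernel_int (t : R) : R := RInt (atan_kernel t) 0 1.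

Lemma one_plus_sqr_gt_0 x : 0 < 1 + x * x.
Proof. nra. Qed.

Lemma continuous_gauss x : continuous gauss x.
Proof. apply ex_derive_continuous_R. unfold gauss. auto_derive. auto. Qed.

Lemma ex_RInt_gauss a b : ex_RInt gauss a b.
Proof. apply ex_RInt_continuous_R. intros; apply continuous_gauss. Qed.

Lemma ex_RInt_atan_kernel t a b : ex_RInt (atan_kernel t) a b.
Proof.
  apply ex_RInt_continuous_R. intros x _. apply ex_derive_continuous_R.
  unfold atan_kernel. auto_derive. generalize (one_plus_sqr_gt_0 x); lra.
Qed.

Lemma is_derive_atan_kernel u v :
  is_derive (fun z => atan_kernel z v) u ((-2 * u) * exp (- (u * u * (1 + v * v)))).
Proof.
  unfold atan_kernel. auto_derive; generalize (one_plus_sqr_gt_0 v); intros; [lra | field; lra].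
Qed.

Lemma continuity_2d_pt_atan_kernel_derive x t :
  continuity_2d_pt (fun u v => (-2 * u) * exp (- (u * u * (1 + v * v)))) t x.
Proof.
  apply continuity_2d_pt_mult.
  - apply continuity_2d_pt_mult; [apply continuity_2d_pt_const | apply continuity_2d_pt_id1].
  - apply (continuity_1d_2d_pt_comp exp (fun u v => - (u * u * (1 + v * v)))).
    + apply derivable_continuous_pt, derivable_exp.
    + apply continuity_2d_pt_opp, continuity_2d_pt_mult.
      * apply continuity_2d_pt_mult; apply continuity_2d_pt_id1.
      * apply continuity_2d_pt_plus; [apply continuity_2d_pt_const|].
        apply continuity_2d_pt_mult; apply continuity_2d_pt_id2.
Qed.

Lemma is_derive_atan_kernel_int t :
  is_derive atan_kernel_int t (-2 * exp (- (t * t)) * gauss_int t).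
Proof.
  assert (E : forall u v, Derive (fun z => atan_kernel z v) u
                          = (-2 * u) * exp (- (u * u * (1 + v * v))))
    by (intros; apply is_derive_unique, is_derive_atan_kernel).
  replace (-2 * exp (- (t * t)) * gauss_int t)
    with (RInt (fun x => Derive (fun u => atan_kernel u x) t) 0 1).
  { apply is_derive_RInt_param.
    - exists (mkposreal 1 Rlt_0_1). intros y _ x _. eexists; apply is_derive_atan_kernel.
    - intros x _. eapply continuity_2d_pt_ext; [|apply continuity_2d_pt_atan_kernel_derive].
      intros; symmetry; apply E.
    - exists (mkposreal 1 Rlt_0_1). intros y _. apply ex_RInt_atan_kernel. }
  (* the substitution s = t x turns the t-derivative into a multiple of [gauss_int t] *)
  rewrite (RInt_ext _ (fun x => -2 * exp (- (t * t)) * (t * gauss (t * x + 0)))).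
  2:{ intros x _. rewrite E. unfold gauss.
      replace (- (t * t * (1 + x * x))) with (- (t * t) + - ((t * x + 0) * (t * x + 0))) by ring.
      rewrite exp_plus. toR. ring. }
  rewrite RInt_scal_R.
  2:{ apply ex_RInt_continuous_R. intros z _. apply ex_derive_continuous_R.
      unfold gauss. auto_derive. auto. }
  rewrite (RInt_comp_lin_R gauss t 0 0 1 (ex_RInt_gauss _ _)).
  rewrite Rmult_0_r, Rmult_1_r, !Rplus_0_r. reflexivity.
Qed.

Lemma is_derive_gauss_int t : is_derive gauss_int t (gauss t).
Proof.
  apply (is_derive_RInt gauss gauss_int 0 t); [|apply continuous_gauss].
  exists (mkposreal 1 Rlt_0_1). intros y _. apply (RInt_correct (V := R_CompleteNormedModule)), ex_RInt_gauss.
Qed.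

Lemma atan_kernel_int_0 : atan_kernel_int 0 = PI / 4.
Proof.
  unfold atan_kernel_int.
  assert (C : forall x, continuous (fun x => / (1 + x²)) x).
  { intros x. apply ex_derive_continuous_R. auto_derive. unfold Rsqr.
    generalize (one_plus_sqr_gt_0 x). lra. }
  assert (I := is_RInt_derive (V := R_CompleteNormedModule) atan (fun x => / (1 + x²)) 0 1
                 (fun x _ => is_derive_atan x) (fun x _ => C x)).
  apply is_RInt_unique in I.
  rewrite (RInt_ext (atan_kernel 0) (fun x => / (1 + x²))).
  2:{ intros x _. unfold atan_kernel, Rsqr.
      replace (- (0 * 0 * (1 + x * x))) with 0 by ring. rewrite exp_0. toR. field.
      generalize (one_plus_sqr_gt_0 x); lra. }
  rewrite I. unfold minus, plus, opp; simpl. rewrite atan_1, atan_0. toR. ring.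
Qed.

(* The classical proof of the Gaussian integral: the derivative of this sum vanishes. *)
Lemma atan_kernel_int_plus_sqr t : atan_kernel_int t + gauss_int t * gauss_int t = PI / 4.
Proof.
  set (h := fun t => atan_kernel_int t + gauss_int t * gauss_int t).
  assert (Hd : forall t, is_derive h t 0).
  { intros x. assert (D := is_derive_plus _ _ x _ _ (is_derive_atan_kernel_int x)
      (is_derive_mult (K := R_AbsRing) gauss_int gauss_int x _ _
         (is_derive_gauss_int x) (is_derive_gauss_int x) Rmult_comm)).
    replace 0 with (plus (-2 * exp (- (x * x)) * gauss_int x)
                      (plus (mult (gauss x) (gauss_int x)) (mult (gauss_int x) (gauss x)))).
    { exact D. }
    unfold plus, mult; simpl. unfold gauss. ring. }
  assert (I := is_RInt_derive (V := R_CompleteNormedModule) h (fun _ => 0) 0 t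
                 (fun x _ => Hd x) (fun x _ => continuous_const _ x)).
  apply is_RInt_unique in I. rewrite RInt_const in I.
  unfold minus, plus, opp, scal in I; simpl in I; unfold mult in I; simpl in I.
  change (h t = PI / 4). replace (h t) with (h 0) by lra.
  unfold h, gauss_int. rewrite RInt_point, atan_kernel_int_0. unfold zero; simpl. ring.
Qed.

Lemma atan_kernel_int_bounds t : 0 <= atan_kernel_int t <= exp (- (t * t)).
Proof.
  unfold atan_kernel_int. split.
  - apply RInt_ge_0; [lra | apply ex_RInt_atan_kernel |]. intros x _. left.
    apply Rdiv_lt_0_compat; [apply exp_pos | apply one_plus_sqr_gt_0].
  - assert (H : RInt (atan_kernel t) 0 1 <= RInt (fun _ => exp (- (t * t))) 0 1).
    { apply RInt_le; [lra | apply ex_RInt_atan_kernel | apply ex_RInt_const |].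
      intros x [h1 h2]. unfold atan_kernel. assert (P := one_plus_sqr_gt_0 x).
      apply Rle_trans with (exp (- (t * t * (1 + x * x))) * 1).
      - apply Rmult_le_compat_l; [left; apply exp_pos|].
        rewrite <- Rinv_1. apply Rinv_le_contravar; nra.
      - rewrite Rmult_1_r. apply exp_le. nra. }
    rewrite RInt_const in H. unfold scal in H; simpl in H; unfold mult in H; simpl in H. lra.
Qed.

Lemma is_lim_gauss_int : is_lim gauss_int p_infty (sqrt PI / 2).
Proof.
  assert (L : is_lim (fun t => gauss_int t * gauss_int t) p_infty (PI / 4)).
  { apply is_lim_ext with (fun t => PI / 4 - atan_kernel_int t).
    { intros t. generalize (atan_kernel_int_plus_sqr t). lra. }
    replace (Finite (PI / 4)) with (Rbar_minus (PI / 4) 0) by (simpl; f_equal; ring).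
    apply is_lim_minus'; [apply is_lim_const|].
    apply (is_lim_le_le_loc (fun _ => 0) (fun t => exp (- t))).
    - exists 1. intros t Ht. destruct (atan_kernel_int_bounds t) as [B1 B2].
      split; auto. eapply Rle_trans; [exact B2|]. apply exp_le. nra.
    - apply is_lim_const.
    - apply is_lim_exp_opp_pinfty. }
  apply is_lim_ext_loc with (fun t => sqrt (gauss_int t * gauss_int t)).
  { exists 0. intros t Ht. apply sqrt_square. unfold gauss_int.
    apply RInt_ge_0; [lra | apply ex_RInt_gauss | intros; left; apply exp_pos]. }
  replace (sqrt PI / 2) with (sqrt (PI / 4)).
  2:{ rewrite sqrt_div; [|left; apply PI_RGT_0 | lra]. f_equal.
      replace 4 with (2 * 2) by ring. apply sqrt_square. lra. }
  eapply filterlim_comp; [exact L | apply continuous_sqrt].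
Qed.

Definition phi (s : R) : R := exp (- s ^ 2 / 2).
Definition phi_int (t : R) : R := RInt phi 0 t.

Lemma continuous_phi x : continuous phi x.
Proof. apply ex_derive_continuous_R. unfold phi. auto_derive. auto. Qed.

Lemma ex_RInt_phi a b : ex_RInt phi a b.
Proof. apply ex_RInt_continuous_R. intros; apply continuous_phi. Qed.

Lemma ex_RInt_phi_shift m a b : ex_RInt (fun v => phi (v + m)) a b.
Proof.
  apply ex_RInt_continuous_R. intros; apply ex_derive_continuous_R.
  unfold phi. auto_derive. auto.
Qed.

Lemma is_lim_phi_int : is_lim phi_int p_infty (sqrt (2 * PI) / 2).
Proof.
  assert (Hs : 0 < sqrt 2) by (apply sqrt_lt_R0; lra).
  assert (H := is_lim_comp_scal_pinfty _ _ (/ sqrt 2) ltac:(apply Rinv_0_lt_compat; auto)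
                 is_lim_gauss_int).
  assert (H2 := is_lim_scal_l _ (sqrt 2) p_infty _ H).
  replace (Rbar_mult (sqrt 2) (sqrt PI / 2)) with (Finite (sqrt (2 * PI) / 2)) in H2
    by (simpl; f_equal; rewrite sqrt_mult; [field | lra | left; apply PI_RGT_0]).
  eapply is_lim_ext; [|exact H2]. intros t. simpl.
  (* the substitution s = u / sqrt 2 *)
  assert (E := RInt_comp_lin_R gauss (/ sqrt 2) 0 0 t (ex_RInt_gauss _ _)).
  rewrite Rmult_0_r, !Rplus_0_r in E. unfold gauss_int. rewrite <- E.
  rewrite RInt_scal_R.
  2:{ apply ex_RInt_continuous_R. intros z _. apply ex_derive_continuous_R.
      unfold gauss. auto_derive. auto. }
  unfold phi_int. rewrite <- Rmult_assoc, Rinv_r, Rmult_1_l by lra.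
  apply RInt_ext. intros x _. unfold gauss, phi. rewrite Rplus_0_r. f_equal.
  assert (E2 : sqrt 2 * sqrt 2 = 2) by (apply sqrt_sqrt; lra).
  field_simplify; [|lra]. replace (sqrt 2 ^ 2) with 2 by (simpl; lra). reflexivity.
Qed.

Definition phi_tail (b : R) : R := sqrt (2 * PI) / 2 - phi_int b.

Lemma phi_opp s : phi (- s) = phi s.
Proof. unfold phi. replace ((- s) ^ 2) with (s ^ 2) by ring. reflexivity. Qed.

Lemma phi_pos s : 0 < phi s.
Proof. apply exp_pos. Qed.

Lemma is_derive_phi_int x : is_derive phi_int x (phi x).
Proof.
  apply (is_derive_RInt phi phi_int 0 x); [|apply continuous_phi].
  exists (mkposreal 1 Rlt_0_1). intros y _.
  apply (RInt_correct (V := R_CompleteNormedModule)), ex_RInt_phi.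
Qed.

Lemma phi_int_opp t : phi_int (- t) = - phi_int t.
Proof.
  unfold phi_int. assert (H := RInt_comp_lin_R phi (-1) 0 0 t (ex_RInt_phi _ _)).
  replace (-1 * 0 + 0) with 0 in H by ring. replace (-1 * t + 0) with (- t) in H by ring.
  rewrite <- H, (RInt_ext _ (fun y => -1 * phi y)).
  - rewrite RInt_scal_R by apply ex_RInt_phi. ring.
  - intros x _. replace (-1 * x + 0) with (- x) by ring. rewrite phi_opp. reflexivity.
Qed.

Lemma RInt_phi_shift m b : RInt (fun v => phi (v + m)) 0 b = phi_int (b + m) - phi_int m.
Proof.
  assert (H := RInt_comp_lin_R phi 1 m 0 b (ex_RInt_phi _ _)).
  rewrite Rmult_0_r, Rplus_0_l, Rmult_1_l in H.
  assert (C := RInt_Chasles_R phi 0 m (b + m) (ex_RInt_phi _ _) (ex_RInt_phi _ _)).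
  unfold phi_int. rewrite (RInt_ext _ (fun y => 1 * phi (1 * y + m))), H; [lra|].
  intros x _. rewrite !Rmult_1_l. reflexivity.
Qed.

Lemma phi_tail_opp_plus m : phi_tail (- m) + phi_tail m = sqrt (2 * PI).
Proof. unfold phi_tail. rewrite phi_int_opp. field. Qed.

Lemma is_lim_sqr_mul_phi : is_lim (fun b => b ^ 2 * phi b) p_infty 0.
Proof.
  apply (is_lim_le_le_loc (fun _ => 0) (fun b => exp ((2 + 1) ^ 2 / (2 * 1)) * exp (- b))).
  - exists 0. intros y Hy. split; [apply Rmult_le_pos; [apply pow2_ge_0 | left; apply phi_pos]|].
    eapply Rle_trans; [|apply (exp_lin_mul_gauss_le 2 1 y); lra].
    unfold phi. replace (- (1 * y ^ 2) / 2) with (- y ^ 2 / 2) by field.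
    apply Rmult_le_compat_r; [left; apply exp_pos|].
    assert (y <= exp y) by (generalize (exp_ineq1_le y); lra).
    replace (2 * y) with (y + y) by ring. rewrite exp_plus. simpl. nra.
  - apply is_lim_const.
  - replace (Finite 0) with (Rbar_mult (exp ((2 + 1) ^ 2 / (2 * 1))) 0) by (simpl; f_equal; ring).
    apply is_lim_scal_l, is_lim_exp_opp_pinfty.
Qed.

Lemma is_lim_phi : is_lim phi p_infty 0.
Proof.
  apply (is_lim_le_le_loc (fun _ => 0) (fun b => b ^ 2 * phi b)).
  - exists 1. intros y Hy. assert (P := phi_pos y). split; [lra|].
    assert (1 <= y ^ 2) by nra. nra.
  - apply is_lim_const.
  - apply is_lim_sqr_mul_phi.
Qed.

Lemma is_lim_id_mul_phi : is_lim (fun b => b * phi b) p_infty 0.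
Proof.
  apply (is_lim_le_le_loc (fun _ => 0) (fun b => b ^ 2 * phi b)).
  - exists 1. intros y Hy. assert (P := phi_pos y). split; [nra|].
    assert (y <= y ^ 2) by nra. nra.
  - apply is_lim_const.
  - apply is_lim_sqr_mul_phi.
Qed.

Lemma is_RInt_0inf_phi_shift m : is_RInt_0inf (fun s => phi (s + m)) (phi_tail m).
Proof.
  split; [intros; apply ex_RInt_phi_shift|].
  apply is_lim_ext with (fun b => phi_int (b + m) - phi_int m).
  { intros; symmetry; apply RInt_phi_shift. }
  apply is_lim_minus'; [|apply is_lim_const].
  apply is_lim_comp_shift_pinfty, is_lim_phi_int.
Qed.

Lemma phi_tail_bounds b : 0 < b -> 0 <= phi_tail b <= phi b / b.
Proof.
  intros Hb. split.
  - apply is_RInt_0inf_le with (fun _ => 0) (fun s => phi (s + b)).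
    + apply is_RInt_0inf_0. auto.
    + apply is_RInt_0inf_phi_shift.
    + intros; left; apply phi_pos.
  - assert (H := is_RInt_0inf_scal _ (phi b) _
                   (is_RInt_0inf_comp_scal _ _ b Hb is_RInt_0inf_exp_opp)).
    replace (phi b * (1 / b)) with (phi b / b) in H by (field; lra).
    apply is_RInt_0inf_le with (fun s => phi (s + b)) (fun u => phi b * exp (- (b * u)));
      [apply is_RInt_0inf_phi_shift | exact H |].
    intros s Hs. unfold phi. rewrite <- exp_plus. apply exp_le.
    assert (0 <= s ^ 2) by apply pow2_ge_0. nra.
Qed.

Lemma is_lim_cube_mul_phi_tail : is_lim (fun b => b ^ 3 * phi_tail b) p_infty 0.
Proof.
  apply (is_lim_le_le_loc (fun _ => 0) (fun b => b ^ 2 * phi b)).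
  - exists 1. intros b Hb. destruct (phi_tail_bounds b ltac:(lra)) as [T1 T2].
    split; [apply Rmult_le_pos; auto; apply pow_le; lra|].
    replace (b ^ 2 * phi b) with (b ^ 3 * (phi b / b)) by (field; lra).
    apply Rmult_le_compat_l; auto. apply pow_le; lra.
  - apply is_lim_const.
  - apply is_lim_sqr_mul_phi.
Qed.

Lemma is_RInt_0inf_id_mul_phi_shift m :
  is_RInt_0inf (fun v => v * phi (v + m)) (phi m - m * phi_tail m).
Proof.
  assert (HA : is_RInt_0inf (fun v => (v + m) * phi (v + m)) (phi m)).
  { assert (R : forall b, RInt (fun v => (v + m) * phi (v + m)) 0 b = phi m - phi (b + m)).
    { intros b. apply is_RInt_unique.
      replace (phi m - phi (b + m)) with
        (minus ((fun v => - phi (v + m)) b) ((fun v => - phi (v + m)) 0)).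
      2:{ unfold minus, plus, opp; simpl. rewrite Rplus_0_l. ring. }
      apply (is_RInt_derive (V := R_CompleteNormedModule) (fun v => - phi (v + m))).
      - intros v _. unfold phi. auto_derive; auto. norm_exp (- (v + m) ^ 2 / 2). field.
      - intros v _. apply ex_derive_continuous_R. unfold phi. auto_derive. auto. }
    split.
    - intros b _. apply ex_RInt_continuous_R. intros; apply ex_derive_continuous_R.
      unfold phi. auto_derive. auto.
    - apply is_lim_ext with (fun b => phi m - phi (b + m)). { intros; symmetry; apply R. }
      replace (Finite (phi m)) with (Rbar_minus (phi m) 0) by (simpl; f_equal; ring).
      apply is_lim_minus'; [apply is_lim_const|].
      apply is_lim_comp_shift_pinfty, is_lim_phi. }
  eapply is_RInt_0inf_ext;
    [|apply (is_RInt_0inf_minus _ _ _ _ HA (is_RInt_0inf_scal _ m _ (is_RInt_0inf_phi_shift m)))].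
  intros v _. simpl. ring.
Qed.

(* The two tails add up to an integral over the whole line. *)
Lemma is_RInt_0inf_id_mul_phi_shift_sub m :
  is_RInt_0inf (fun v => v * phi (v - m) - v * phi (v + m)) (m * sqrt (2 * PI)).
Proof.
  assert (H := is_RInt_0inf_minus _ _ _ _
                 (is_RInt_0inf_id_mul_phi_shift (- m)) (is_RInt_0inf_id_mul_phi_shift m)).
  replace (m * sqrt (2 * PI)) with (phi (- m) - - m * phi_tail (- m) - (phi m - m * phi_tail m)).
  - eapply is_RInt_0inf_ext; [|exact H]. intros v _. reflexivity.
  - rewrite phi_opp, <- (phi_tail_opp_plus m). ring.
Qed.

Lemma is_RInt_0inf_sqr_mul_phi : is_RInt_0inf (fun u => u ^ 2 * phi u) (sqrt (2 * PI) / 2).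
Proof.
  assert (D : forall b, is_RInt (fun v => v ^ 2 * phi v - phi v) 0 b (- (b * phi b))).
  { intros b.
    replace (- (b * phi b)) with (minus ((fun v => - (v * phi v)) b) ((fun v => - (v * phi v)) 0)).
    2:{ unfold minus, plus, opp; simpl. ring. }
    apply (is_RInt_derive (V := R_CompleteNormedModule) (fun v => - (v * phi v))).
    - intros v _. unfold phi. auto_derive; auto. norm_exp (- v ^ 2 / 2). field.
    - intros v _. apply ex_derive_continuous_R. unfold phi. auto_derive. auto. }
  assert (R : forall b, RInt (fun u => u ^ 2 * phi u) 0 b = phi_int b - b * phi b).
  { intros b. rewrite (RInt_ext _ (fun v => (v ^ 2 * phi v - phi v) + phi v)) by (intros; toR; ring).
    rewrite RInt_plus_R; [| eexists; apply D | apply ex_RInt_phi].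
    rewrite (is_RInt_unique _ _ _ _ (D b)). unfold phi_int. lra. }
  split.
  - intros b _. apply ex_RInt_continuous_R. intros; apply ex_derive_continuous_R.
    unfold phi. auto_derive. auto.
  - apply is_lim_ext with (fun b => phi_int b - b * phi b). { intros; symmetry; apply R. }
    replace (Finite (sqrt (2 * PI) / 2)) with (Rbar_minus (sqrt (2 * PI) / 2) 0)
      by (simpl; f_equal; ring).
    apply is_lim_minus'; [apply is_lim_phi_int | apply is_lim_id_mul_phi].
Qed.

Lemma is_RInt_0inf_sqr_mul_gauss d : 0 < d ->
  is_RInt_0inf (fun u => u ^ 2 * exp (- (d * u ^ 2) / 2)) (sqrt (2 * PI) / (2 * d * sqrt d)).
Proof.
  intros Hd. assert (Hs : 0 < sqrt d) by (apply sqrt_lt_R0; auto).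
  assert (E : sqrt d * sqrt d = d) by (apply sqrt_sqrt; lra).
  assert (H := is_RInt_0inf_scal _ (/ d) _
                 (is_RInt_0inf_comp_scal _ _ (sqrt d) Hs is_RInt_0inf_sqr_mul_phi)).
  replace (sqrt (2 * PI) / (2 * d * sqrt d)) with (/ d * (sqrt (2 * PI) / 2 / sqrt d))
    by (field; split; lra).
  eapply is_RInt_0inf_ext; [|exact H]. intros x _. unfold phi.
  replace ((sqrt d * x) ^ 2) with (d * x ^ 2) by (simpl; rewrite <- E at 1; ring).
  field. lra.
Qed.

Definition is_RInt2_0inf (F : R -> R -> R) (L : R) : Prop :=
  exists g : R -> R, (forall x, 0 <= x -> is_RInt_0inf (F x) (g x)) /\ is_RInt_0inf g L.

Lemma is_RInt2_0inf_unique F L1 L2 : is_RInt2_0inf F L1 -> is_RInt2_0inf F L2 -> L1 = L2.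
Proof.
  intros [g1 [A1 B1]] [g2 [A2 B2]]. apply (is_RInt_0inf_unique g1); auto.
  apply is_RInt_0inf_ext with g2; auto.
  intros x Hx. apply (is_RInt_0inf_unique (F x)); [apply A2 | apply A1]; lra.
Qed.

Lemma is_RInt2_0inf_ext F G L :
  (forall x y, 0 <= x -> 0 < y -> F x y = G x y) -> is_RInt2_0inf F L -> is_RInt2_0inf G L.
Proof.
  intros H [g [A B]]. exists g. split; auto.
  intros x Hx. eapply is_RInt_0inf_ext; [|apply A; auto]. intros; apply H; auto.
Qed.

Lemma is_RInt2_0inf_scal F L k :
  is_RInt2_0inf F L -> is_RInt2_0inf (fun x y => k * F x y) (k * L).
Proof.
  intros [g [A B]]. exists (fun x => k * g x).
  split; [intros; apply is_RInt_0inf_scal; auto | apply is_RInt_0inf_scal; auto].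
Qed.

Lemma is_RInt2_0inf_comp_scal F L t : 0 < t ->
  is_RInt2_0inf (fun u v => F (t * u) (t * v)) L -> is_RInt2_0inf F (t * t * L).
Proof.
  intros Ht [g [A B]]. assert (Hi : 0 < / t) by (apply Rinv_0_lt_compat; auto).
  exists (fun x => t * g (/ t * x)). split.
  - intros x Hx.
    assert (H := is_RInt_0inf_comp_scal _ _ (/ t) Hi (A (/ t * x) ltac:(apply Rmult_le_pos; lra))).
    replace (g (/ t * x) / / t) with (t * g (/ t * x)) in H by (field; lra).
    eapply is_RInt_0inf_ext; [|exact H]. intros y _. simpl. f_equal; field; lra.
  - assert (H := is_RInt_0inf_scal _ t _ (is_RInt_0inf_comp_scal _ _ (/ t) Hi B)).
    replace (t * (L / / t)) with (t * t * L) in H by (field; lra). exact H.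
Qed.

Lemma is_RInt2_0inf_Rabs_sub_le F1 F2 L1 L2 A B LA LB :
  is_RInt2_0inf F1 L1 -> is_RInt2_0inf F2 L2 ->
  (forall x y, 0 < x -> 0 < y -> Rabs (F1 x y - F2 x y) <= A x * B y) ->
  is_RInt_0inf A LA -> is_RInt_0inf B LB -> Rabs (L1 - L2) <= LA * LB.
Proof.
  intros [g1 [I1 O1]] [g2 [I2 O2]] Hb HA HB.
  apply is_RInt_0inf_Rabs_le with (fun x => g1 x - g2 x) (fun x => A x * LB).
  - apply is_RInt_0inf_minus; auto.
  - rewrite Rmult_comm. eapply is_RInt_0inf_ext; [|exact (is_RInt_0inf_scal A LB LA HA)].
    intros; simpl; ring.
  - intros x Hx. apply is_RInt_0inf_Rabs_le with (fun y => F1 x y - F2 x y) (fun y => A x * B y).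
    + apply is_RInt_0inf_minus; [apply I1 | apply I2]; lra.
    + apply is_RInt_0inf_scal; auto.
    + intros y Hy; apply Hb; auto.
Qed.

Lemma is_RInt_0inf_param_dominated (H : R -> R -> R) (a B : R -> R) LB :
  (forall x y, 0 <= y -> continuous (H x) y) ->
  (forall x y, 0 < y -> Rabs (H x y) <= a x * B y) -> is_RInt_0inf B LB ->
  forall x, is_RInt_0inf (H x) (RInt_0inf (H x)) /\ Rabs (RInt_0inf (H x)) <= a x * LB.
Proof.
  intros Hc Hb HB x.
  assert (HaB := is_RInt_0inf_scal _ (a x) _ HB).
  assert (I : is_RInt_0inf (H x) (RInt_0inf (H x))).
  { apply is_RInt_0inf_RInt_0inf, ex_is_RInt_0inf_dominated with (fun y => a x * B y) (a x * LB);
      [|intros y Hy; apply Hb; auto | auto].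
    intros b Hb0. apply ex_RInt_continuous_R. intros z [h1 h2].
    rewrite Rmin_left in h1 by lra. apply Hc; lra. }
  split; auto. apply is_RInt_0inf_Rabs_le with (H x) (fun y => a x * B y); auto.
Qed.

Lemma continuous_RInt_0inf_param (H : R -> R -> R) :
  (forall x, is_RInt_0inf (H x) (RInt_0inf (H x))) ->
  (forall U, 0 <= U -> exists D LD, is_RInt_0inf D LD /\
     forall x x' y, Rabs x <= U -> Rabs x' <= U -> 0 < y ->
       Rabs (H x y - H x' y) <= Rabs (x - x') * D y) ->
  forall x0, continuous (fun x => RInt_0inf (H x)) x0.
Proof.
  intros HI HL x0. set (h := fun x => RInt_0inf (H x)).
  destruct (HL (Rabs x0 + 1)) as [D [LD [HD HDL]]]; [generalize (Rabs_pos x0); lra|].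
  assert (Lip : forall x, Rabs (x - x0) < 1 -> Rabs (h x - h x0) <= Rabs (x - x0) * Rabs LD).
  { intros x Hx. apply Rle_trans with (Rabs (x - x0) * LD).
    - apply is_RInt_0inf_Rabs_le with (fun y => H x y - H x0 y) (fun y => Rabs (x - x0) * D y).
      + apply is_RInt_0inf_minus; auto.
      + apply is_RInt_0inf_scal; auto.
      + intros y Hy. apply HDL; auto; [|lra].
        assert (Rabs x - Rabs x0 <= Rabs (x - x0)) by apply Rabs_triang_inv. lra.
    - apply Rmult_le_compat_l; [apply Rabs_pos | apply Rle_abs]. }
  apply continuity_pt_filterlim. intros eps Heps.
  exists (Rmin 1 (eps / (Rabs LD + 1))). split.
  { apply Rmin_pos; [lra|]. apply Rdiv_lt_0_compat; auto. generalize (Rabs_pos LD); lra. }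
  intros x [_ Hx]. simpl in *. unfold R_dist in *.
  assert (Hx1 : Rabs (x - x0) < 1) by (generalize (Rmin_l 1 (eps / (Rabs LD + 1))); lra).
  assert (Hx2 : Rabs (x - x0) < eps / (Rabs LD + 1))
    by (generalize (Rmin_r 1 (eps / (Rabs LD + 1))); lra).
  eapply Rle_lt_trans; [apply Lip; auto|].
  assert (P := Rabs_pos LD). assert (P2 := Rabs_pos (x - x0)).
  apply Rmult_lt_compat_r with (r := Rabs LD + 1) in Hx2; [|lra].
  unfold Rdiv in Hx2. rewrite Rmult_assoc, Rinv_l in Hx2 by lra. nra.
Qed.

Lemma rpow_ge_0 x r : 0 <= rpow x r.
Proof. unfold rpow. destruct (Rle_dec x 0); [lra | left; apply exp_pos]. Qed.

Lemma rpow_eq_Rpower x r : 0 < x -> rpow x r = Rpower x r.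
Proof. intros H. unfold rpow. destruct (Rle_dec x 0); [lra | auto]. Qed.

Lemma rpow_eq_0 x r : x <= 0 -> rpow x r = 0.
Proof. intros H. unfold rpow. destruct (Rle_dec x 0); [auto | lra]. Qed.

Lemma rpow_gt_0 x r : 0 < x -> 0 < rpow x r.
Proof. intros Hx. rewrite rpow_eq_Rpower by auto. apply exp_pos. Qed.

Lemma rpow_1 x : 0 <= x -> rpow x 1 = x.
Proof.
  intros [Hx | <-]; [rewrite rpow_eq_Rpower, Rpower_1; auto | apply rpow_eq_0; lra].
Qed.

Lemma rpow_le_exp x r : 0 < r -> rpow x r <= exp (r * x).
Proof.
  intros Hr. unfold rpow. destruct (Rle_dec x 0); [left; apply exp_pos|].
  apply exp_le. assert (H := exp_ineq1_le (ln x)). rewrite exp_ln in H by lra. nra.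
Qed.

Lemma continuous_rpow r x : 0 < r -> continuous (fun y => rpow y r) x.
Proof.
  intros Hr. destruct (Rtotal_order x 0) as [Hx|[Hx|Hx]].
  - apply continuous_ext_loc with (fun _ => 0); [|apply continuous_const].
    exists (mkposreal (- x) ltac:(lra)). intros y Hy. simpl in Hy.
    unfold ball in Hy; simpl in Hy; unfold AbsRing_ball, abs, minus, plus, opp in Hy; simpl in Hy.
    apply Rabs_lt_between in Hy. rewrite rpow_eq_0; auto. lra.
  - (* at 0, y^r < eps as soon as y < eps^(1/r) *)
    subst. apply continuity_pt_filterlim. intros eps Heps.
    exists (Rpower eps (/ r)). split; [apply exp_pos|].
    intros y [_ Hy]. simpl in *. unfold R_dist in *.
    rewrite (rpow_eq_0 0 r), Rminus_0_r in * by lra.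
    unfold rpow. destruct (Rle_dec y 0); [rewrite Rabs_R0; lra|].
    rewrite Rabs_right by (left; apply exp_pos). rewrite Rabs_right in Hy by lra.
    unfold Rpower in *. rewrite <- (exp_ln eps) by auto. apply exp_increasing.
    assert (ln y < / r * ln eps).
    { rewrite <- (ln_exp (/ r * ln eps)). apply ln_increasing; lra. }
    apply Rmult_lt_compat_l with (r := r) in H; auto.
    rewrite <- Rmult_assoc, Rinv_r in H; lra.
  - apply continuous_ext_loc with (fun y => exp (r * ln y)).
    + exists (mkposreal x Hx). intros y Hy. simpl in Hy.
      unfold ball in Hy; simpl in Hy; unfold AbsRing_ball, abs, minus, plus, opp in Hy; simpl in Hy.
      apply Rabs_lt_between in Hy. rewrite rpow_eq_Rpower by lra. reflexivity.
    + apply ex_derive_continuous_R. auto_derive. lra.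
Qed.

Lemma rpow_mul_gauss_le r k y : 0 < r -> 0 < k ->
  Rabs (rpow y r * exp (- (k * y ^ 2) / 2)) <= exp ((r + 1) ^ 2 / (2 * k)) * exp (- y).
Proof.
  intros Hr Hk.
  rewrite Rabs_right by (apply Rle_ge, Rmult_le_pos; [apply rpow_ge_0 | left; apply exp_pos]).
  eapply Rle_trans; [|apply (exp_lin_mul_gauss_le r k y Hk)].
  apply Rmult_le_compat_r; [left; apply exp_pos | apply rpow_le_exp; auto].
Qed.

Lemma continuous_exp_comp (f : R -> R) x : ex_derive f x -> continuous (fun y => exp (f y)) x.
Proof.
  intros H. apply ex_derive_continuous_R. apply ex_derive_comp; auto.
  apply ex_derive_Reals_1, derivable_pt_exp.
Qed.

Lemma ex_is_RInt_0inf_rpow_lin_gauss r k p : 0 < r -> 0 < k -> 0 <= p ->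
  exists L, is_RInt_0inf (fun y => rpow y r * (p + y) * exp (- (k * y ^ 2) / 2)) L.
Proof.
  intros Hr Hk Hp. apply ex_is_RInt_0inf_exp_bound with ((p + 1) * exp ((r + 1 + 1) ^ 2 / (2 * k))).
  - intros y _. apply continuous_mult_R; [apply continuous_mult_R|].
    + apply continuous_rpow; auto.
    + apply ex_derive_continuous_R. auto_derive. auto.
    + apply continuous_exp_comp. auto_derive. auto.
  - intros y Hy. rewrite Rabs_right.
    2:{ apply Rle_ge, Rmult_le_pos; [apply Rmult_le_pos|]; [apply rpow_ge_0 | lra | left; apply exp_pos]. }
    assert (H1 := rpow_le_exp y r Hr). assert (H2 := exp_ineq1_le y).
    assert (H3 := exp_lin_mul_gauss_le (r + 1) k y Hk).
    assert (H4 : p + y <= (p + 1) * exp y) by nra.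
    assert (E : exp (r * y) * exp y = exp ((r + 1) * y)) by (rewrite <- exp_plus; f_equal; ring).
    apply Rle_trans with (exp (r * y) * ((p + 1) * exp y) * exp (- (k * y ^ 2) / 2)).
    + apply Rmult_le_compat_r; [left; apply exp_pos|].
      apply Rmult_le_compat; auto; [apply rpow_ge_0 | lra].
    + replace (exp (r * y) * ((p + 1) * exp y) * exp (- (k * y ^ 2) / 2))
        with ((p + 1) * (exp ((r + 1) * y) * exp (- (k * y ^ 2) / 2))) by (rewrite <- E; ring).
      rewrite Rmult_assoc. apply Rmult_le_compat_l; lra.
Qed.

(** * The kernel integral J_r(c) *)

Definition quad_form (c u v : R) : R := u ^ 2 - 2 * c * u * v + v ^ 2.

Definition J_integrand (r c u v : R) : R := rpow u r * rpow v r * exp (- quad_form c u v / 2).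
Definition J_inner (r c u : R) : R := RInt_0inf (J_integrand r c u).
Definition J (r c : R) : R := RInt_0inf (J_inner r c).

(* [u] is clamped to [0, +oo) so that the Lipschitz bound in [u] holds on all of R;
   the factor [rpow u r] of [J_integrand] vanishes where the clamp is active. *)
Definition J_kernel (r c u v : R) : R := rpow v r * exp (- quad_form c (Rmax 0 u) v / 2).

Lemma quad_form_ge c u v : -1 <= c < 1 -> 0 <= u -> 0 <= v ->
  Rmin 1 (1 - c) * (u ^ 2 + v ^ 2) <= quad_form c u v.
Proof.
  intros Hc Hu Hv. unfold quad_form. destruct (Rle_dec c 0).
  - assert (Rmin 1 (1 - c) <= 1) by apply Rmin_l.
    assert (0 <= - c * (u * v)) by (apply Rmult_le_pos; nra). nra.
  - rewrite Rmin_right by lra.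
    assert (0 <= c * (u - v) ^ 2) by (apply Rmult_le_pos; [lra | apply pow2_ge_0]). nra.
Qed.

Lemma Rabs_Rmax0_sub_le x x' : Rabs (Rmax 0 x - Rmax 0 x') <= Rabs (x - x').
Proof.
  unfold Rmax. destruct (Rle_dec 0 x); destruct (Rle_dec 0 x'); unfold Rabs;
    repeat match goal with |- context [Rcase_abs ?a] => destruct (Rcase_abs a) end; lra.
Qed.

Lemma J_integrand_eq r c u v : J_integrand r c u v = rpow u r * J_kernel r c u v.
Proof.
  unfold J_integrand, J_kernel. destruct (Rle_dec u 0).
  - rewrite rpow_eq_0 by auto. ring.
  - rewrite Rmax_right by lra. ring.
Qed.

Section Kernel.

Variables r c : R.
Hypothesis Hr : 0 < r.
Hypothesis Hc : -1 <= c < 1.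

Lemma Rmin_1_sub_gt_0 : 0 < Rmin 1 (1 - c).
Proof. apply Rmin_glb_lt; lra. Qed.

Lemma continuous_J_kernel u v : continuous (J_kernel r c u) v.
Proof.
  apply continuous_mult_R; [apply continuous_rpow; auto|].
  apply continuous_exp_comp. unfold quad_form. auto_derive. auto.
Qed.

Lemma Rabs_J_kernel_le u v : 0 < v ->
  Rabs (J_kernel r c u v) <=
  exp (- (Rmin 1 (1 - c) * Rmax 0 u ^ 2) / 2) * (rpow v r * exp (- (Rmin 1 (1 - c) * v ^ 2) / 2)).
Proof.
  intros Hv. set (k := Rmin 1 (1 - c)). unfold J_kernel.
  rewrite Rabs_right by (apply Rle_ge, Rmult_le_pos; [apply rpow_ge_0 | left; apply exp_pos]).
  replace (exp (- (k * Rmax 0 u ^ 2) / 2) * (rpow v r * exp (- (k * v ^ 2) / 2)))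
    with (rpow v r * exp (- (k * Rmax 0 u ^ 2) / 2 + - (k * v ^ 2) / 2)) by (rewrite exp_plus; ring).
  apply Rmult_le_compat_l; [apply rpow_ge_0|]. apply exp_le.
  assert (QL := quad_form_ge c (Rmax 0 u) v Hc (Rmax_l 0 u) (Rlt_le _ _ Hv)). fold k in QL. lra.
Qed.

Lemma Rabs_J_kernel_sub_le U u u' v : Rabs u <= U -> Rabs u' <= U -> 0 < v ->
  Rabs (J_kernel r c u v - J_kernel r c u' v)
  <= Rabs (u - u') * (rpow v r * (U + v) * exp (- (Rmin 1 (1 - c) * v ^ 2) / 2)).
Proof.
  intros Hu Hu' Hv. unfold J_kernel.
  set (k := Rmin 1 (1 - c)). set (X := Rmax 0 u). set (X' := Rmax 0 u').
  assert (HX : 0 <= X <= U)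
    by (split; [apply Rmax_l | apply Rmax_lub; generalize (Rabs_pos u) (Rle_abs u); lra]).
  assert (HX' : 0 <= X' <= U)
    by (split; [apply Rmax_l | apply Rmax_lub; generalize (Rabs_pos u') (Rle_abs u'); lra]).
  rewrite <- Rmult_minus_distr_l, Rabs_mult, (Rabs_right (rpow v r)) by (apply Rle_ge, rpow_ge_0).
  replace (Rabs (u - u') * (rpow v r * (U + v) * exp (- (k * v ^ 2) / 2)))
    with (rpow v r * (Rabs (u - u') * (U + v) * exp (- (k * v ^ 2) / 2))) by ring.
  apply Rmult_le_compat_l; [apply rpow_ge_0|].
  eapply Rle_trans; [apply Rabs_exp_sub_le|].
  apply Rmult_le_compat; [apply Rabs_pos | left; apply exp_pos | |].
  -     replace (- quad_form c X v / 2 - - quad_form c X' v / 2)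
      with ((X' - X) * ((X' + X - 2 * c * v) / 2)) by (unfold quad_form; field).
    rewrite Rabs_mult. apply Rmult_le_compat; try apply Rabs_pos.
    + rewrite Rabs_minus_sym. apply Rabs_Rmax0_sub_le.
    + apply Rabs_le. split; nra.
  - assert (Hk : 0 <= k) by (left; apply Rmin_1_sub_gt_0).
    apply exp_le, Rmax_lub.
    + assert (QL := quad_form_ge c X v Hc (proj1 HX) (Rlt_le _ _ Hv)). fold k in QL.
      assert (0 <= k * X ^ 2) by (apply Rmult_le_pos; [lra | apply pow2_ge_0]). nra.
    + assert (QL := quad_form_ge c X' v Hc (proj1 HX') (Rlt_le _ _ Hv)). fold k in QL.
      assert (0 <= k * X' ^ 2) by (apply Rmult_le_pos; [lra | apply pow2_ge_0]). nra.
Qed.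

Lemma is_RInt_0inf_J_kernel :
  exists LB, forall u, is_RInt_0inf (J_kernel r c u) (RInt_0inf (J_kernel r c u)) /\
    Rabs (RInt_0inf (J_kernel r c u)) <= exp (- (Rmin 1 (1 - c) * Rmax 0 u ^ 2) / 2) * LB.
Proof.
  assert (Hk := Rmin_1_sub_gt_0). set (k := Rmin 1 (1 - c)).
  destruct (ex_is_RInt_0inf_exp_bound (fun v => rpow v r * exp (- (k * v ^ 2) / 2))
              (exp ((r + 1) ^ 2 / (2 * k)))) as [LB HB].
  { intros v _. apply continuous_mult_R; [apply continuous_rpow; auto|].
    apply continuous_exp_comp. auto_derive. auto. }
  { intros v _. apply rpow_mul_gauss_le; auto. }
  exists LB. apply (is_RInt_0inf_param_dominated (J_kernel r c)
    (fun u => exp (- (k * Rmax 0 u ^ 2) / 2)) (fun v => rpow v r * exp (- (k * v ^ 2) / 2)) LB); auto.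
  - intros; apply continuous_J_kernel.
  - intros; apply Rabs_J_kernel_le; auto.
Qed.

Lemma continuous_RInt_0inf_J_kernel u : continuous (fun u => RInt_0inf (J_kernel r c u)) u.
Proof.
  destruct is_RInt_0inf_J_kernel as [LB HLB].
  apply continuous_RInt_0inf_param; [intros; apply HLB|].
  intros U HU. destruct (ex_is_RInt_0inf_rpow_lin_gauss r _ U Hr Rmin_1_sub_gt_0 HU) as [LD HD].
  exists (fun v => rpow v r * (U + v) * exp (- (Rmin 1 (1 - c) * v ^ 2) / 2)), LD.
  split; auto. intros; apply Rabs_J_kernel_sub_le; auto.
Qed.

Lemma is_RInt_0inf_J_integrand_kernel u :
  is_RInt_0inf (J_integrand r c u) (rpow u r * RInt_0inf (J_kernel r c u)).
Proof.
  destruct is_RInt_0inf_J_kernel as [LB HLB].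
  eapply is_RInt_0inf_ext; [|apply (is_RInt_0inf_scal (J_kernel r c u) (rpow u r)), HLB].
  intros; symmetry; apply J_integrand_eq.
Qed.

Lemma J_inner_eq u : J_inner r c u = rpow u r * RInt_0inf (J_kernel r c u).
Proof.
  apply (is_RInt_0inf_unique (J_integrand r c u)); [|apply is_RInt_0inf_J_integrand_kernel].
  apply is_RInt_0inf_RInt_0inf. eexists. apply is_RInt_0inf_J_integrand_kernel.
Qed.

Lemma is_RInt_0inf_J_integrand u : is_RInt_0inf (J_integrand r c u) (J_inner r c u).
Proof. rewrite J_inner_eq. apply is_RInt_0inf_J_integrand_kernel. Qed.

Lemma continuous_J_inner u : continuous (J_inner r c) u.
Proof.
  apply continuous_ext with (fun u => rpow u r * RInt_0inf (J_kernel r c u)).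
  { intros; symmetry; apply J_inner_eq. }
  apply continuous_mult_R; [apply continuous_rpow; auto | apply continuous_RInt_0inf_J_kernel].
Qed.

Lemma is_RInt_0inf_J_inner : is_RInt_0inf (J_inner r c) (J r c).
Proof.
  assert (Hk := Rmin_1_sub_gt_0). set (k := Rmin 1 (1 - c)).
  destruct is_RInt_0inf_J_kernel as [LB HLB]. fold k in HLB.
  apply is_RInt_0inf_RInt_0inf, ex_is_RInt_0inf_exp_bound with (Rabs LB * exp ((r + 1) ^ 2 / (2 * k))).
  { intros; apply continuous_J_inner. }
  intros u Hu. rewrite J_inner_eq, Rabs_mult, (Rabs_right (rpow u r)) by (apply Rle_ge, rpow_ge_0).
  destruct (HLB u) as [_ B]. rewrite Rmax_right in B by lra.
  assert (G := rpow_mul_gauss_le r k u Hr Hk).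
  rewrite Rabs_right in G by (apply Rle_ge, Rmult_le_pos; [apply rpow_ge_0 | left; apply exp_pos]).
  assert (P := rpow_ge_0 u r). assert (PL := Rabs_pos LB).
  apply Rle_trans with (rpow u r * (exp (- (k * u ^ 2) / 2) * Rabs LB)).
  - apply Rmult_le_compat_l; auto. eapply Rle_trans; [exact B|].
    apply Rmult_le_compat_l; [left; apply exp_pos | apply Rle_abs].
  - replace (rpow u r * (exp (- (k * u ^ 2) / 2) * Rabs LB))
      with (Rabs LB * (rpow u r * exp (- (k * u ^ 2) / 2))) by ring.
    rewrite Rmult_assoc. apply Rmult_le_compat_l; auto.
Qed.

Lemma is_RInt2_0inf_J : is_RInt2_0inf (J_integrand r c) (J r c).
Proof.
  exists (J_inner r c). split; [intros; apply is_RInt_0inf_J_integrand | apply is_RInt_0inf_J_inner].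
Qed.

End Kernel.

Lemma J_gt_0 r c : 0 < r -> -1 <= c < 1 -> 0 < J r c.
Proof.
  intros Hr Hc.
  assert (Wpos : forall x y, 0 < x -> 0 < y -> 0 < J_integrand r c x y).
  { intros x y Hx Hy. unfold J_integrand.
    apply Rmult_lt_0_compat; [apply Rmult_lt_0_compat; apply rpow_gt_0; lra | apply exp_pos]. }
  assert (Wnn : forall x y, 0 < y -> 0 <= J_integrand r c x y).
  { intros x y Hy. unfold J_integrand.
    apply Rmult_le_pos; [apply Rmult_le_pos; apply rpow_ge_0 | left; apply exp_pos]. }
  assert (Wcont : forall x y, continuous (J_integrand r c x) y).
  { intros x y. unfold J_integrand. apply continuous_mult_R; [apply continuous_mult_R|].
    - apply continuous_const.
    - apply continuous_rpow; auto.
    - apply continuous_exp_comp. unfold quad_form. auto_derive. auto. }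
  assert (Inner_pos : forall x, 0 < x -> 0 < J_inner r c x).
  { intros x Hx. apply is_RInt_0inf_gt_0 with (J_integrand r c x);
      auto using is_RInt_0inf_J_integrand. intros y Hy. apply Wpos; lra. }
  apply is_RInt_0inf_gt_0 with (J_inner r c); auto using is_RInt_0inf_J_inner.
  - intros x Hx. left; auto.
  - intros; apply continuous_J_inner; auto.
  - intros x Hx. apply Inner_pos; lra.
Qed.

Lemma Rabs_J_integrand_sub_le r c x y : 0 < r -> -1 <= c <= 0 -> 0 < x -> 0 < y ->
  Rabs (J_integrand r c x y - J_integrand r (-1) x y) <=
  ((1 + c) * (rpow x r * (0 + x) * exp (- (1 * x ^ 2) / 2)))
  * (rpow y r * (0 + y) * exp (- (1 * y ^ 2) / 2)).
Proof.
  intros Hr Hc Hx Hy. unfold J_integrand.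
  set (a := - quad_form c x y / 2). set (b := - quad_form (-1) x y / 2).
  assert (Eab : a - b = (1 + c) * x * y) by (unfold a, b, quad_form; field).
  assert (Hab : b <= a) by (assert (0 <= (1 + c) * x * y) by (apply Rmult_le_pos; nra); lra).
  destruct (exp_sub_bounds a b Hab) as [D1 D2].
  assert (Ea : exp a <= exp (- (1 * x ^ 2) / 2) * exp (- (1 * y ^ 2) / 2)).
  { rewrite <- exp_plus. apply exp_le. unfold a, quad_form.
    assert (0 <= - c * (x * y)) by (apply Rmult_le_pos; nra). nra. }
  assert (Px := rpow_ge_0 x r). assert (Py := rpow_ge_0 y r).
  replace (rpow x r * rpow y r * exp a - rpow x r * rpow y r * exp b)
    with (rpow x r * rpow y r * (exp a - exp b)) by ring.
  rewrite Rabs_mult, !Rabs_right by (apply Rle_ge; try apply Rmult_le_pos; lra).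
  apply Rle_trans with
    (rpow x r * rpow y r * ((a - b) * (exp (- (1 * x ^ 2) / 2) * exp (- (1 * y ^ 2) / 2)))).
  - apply Rmult_le_compat_l; [apply Rmult_le_pos; auto|].
    eapply Rle_trans; [apply D2 | apply Rmult_le_compat_l; lra].
  - rewrite Eab. right. ring.
Qed.

(* J_r is Lipschitz at c = -1, because d/dc of the integrand is u v times the integrand. *)
Lemma J_sub_J_m1_le r : 0 < r ->
  exists C, 0 <= C /\ forall c, -1 <= c <= 0 -> Rabs (J r c - J r (-1)) <= (1 + c) * C.
Proof.
  intros Hr. destruct (ex_is_RInt_0inf_rpow_lin_gauss r 1 0 Hr Rlt_0_1 (Rle_refl 0)) as [LA HA].
  exists (Rabs LA * Rabs LA). split; [apply Rmult_le_pos; apply Rabs_pos|].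
  intros c Hc. eapply Rle_trans.
  - apply (is_RInt2_0inf_Rabs_sub_le (J_integrand r c) (J_integrand r (-1)) _ _
             (fun x => (1 + c) * (rpow x r * (0 + x) * exp (- (1 * x ^ 2) / 2)))
             (fun y => rpow y r * (0 + y) * exp (- (1 * y ^ 2) / 2)) ((1 + c) * LA) LA).
    + apply is_RInt2_0inf_J; lra.
    + apply is_RInt2_0inf_J; lra.
    + intros; apply Rabs_J_integrand_sub_le; auto.
    + apply is_RInt_0inf_scal; auto.
    + auto.
  - rewrite Rmult_assoc. apply Rmult_le_compat_l; [lra|].
    rewrite <- Rabs_mult. apply Rle_abs.
Qed.

(* Completing the square in v, the u-section of J_1(c) - J_1(-c) is a Gaussian first moment. *)
Lemma J_1_sub_J_1_opp c : -1 < c < 1 ->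
  J 1 c - J 1 (- c) = c * PI / ((1 - c ^ 2) * sqrt (1 - c ^ 2)).
Proof.
  intros Hc. set (d := 1 - c ^ 2). assert (Hd : 0 < d) by (unfold d; nra).
  assert (Inner : forall x, 0 < x ->
            J_inner 1 c x - J_inner 1 (- c) x = exp (- (d * x ^ 2) / 2) * x * (c * x * sqrt (2 * PI))).
  { intros x Hx. apply (is_RInt_0inf_unique (fun y => J_integrand 1 c x y - J_integrand 1 (- c) x y)).
    - apply is_RInt_0inf_minus; apply is_RInt_0inf_J_integrand; lra.
    - eapply is_RInt_0inf_ext;
        [|apply (is_RInt_0inf_scal _ (exp (- (d * x ^ 2) / 2) * x)
                   _ (is_RInt_0inf_id_mul_phi_shift_sub (c * x)))].
      intros y Hy. unfold J_integrand, phi. rewrite !rpow_1 by lra.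
      replace (- quad_form c x y / 2) with (- (d * x ^ 2) / 2 + - (y - c * x) ^ 2 / 2)
        by (unfold quad_form, d; field).
      replace (- quad_form (- c) x y / 2) with (- (d * x ^ 2) / 2 + - (y + c * x) ^ 2 / 2)
        by (unfold quad_form, d; field).
      rewrite !exp_plus. ring. }
  apply (is_RInt_0inf_unique (fun x => J_inner 1 c x - J_inner 1 (- c) x)).
  - apply is_RInt_0inf_minus; apply is_RInt_0inf_J_inner; lra.
  - assert (H := is_RInt_0inf_scal _ (c * sqrt (2 * PI)) _ (is_RInt_0inf_sqr_mul_gauss d Hd)).
    assert (S : sqrt (2 * PI) * sqrt (2 * PI) = 2 * PI)
      by (apply sqrt_sqrt; generalize PI_RGT_0; lra).
    assert (0 < sqrt d) by (apply sqrt_lt_R0; auto).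
    replace (c * sqrt (2 * PI) * (sqrt (2 * PI) / (2 * d * sqrt d))) with (c * PI / (d * sqrt d)) in H.
    2:{ replace (c * sqrt (2 * PI) * (sqrt (2 * PI) / (2 * d * sqrt d)))
          with (c * (sqrt (2 * PI) * sqrt (2 * PI)) / (2 * d * sqrt d)) by (field; lra).
        rewrite S. field. lra. }
    eapply is_RInt_0inf_ext; [|exact H]. intros x Hx. rewrite Inner by lra. ring.
Qed.

(* The integrand is [J_inner 1 (-1)]; [P] is an explicit antiderivative of it. *)
Lemma is_RInt_0inf_J_1_m1_inner :
  is_RInt_0inf (fun x => x * phi x - x ^ 2 * phi_tail x) (1 / 3).
Proof.
  set (P := fun x => (x ^ 2 - 1) * phi x / 3 - x ^ 3 * phi_tail x / 3).
  assert (HP : forall x, is_derive P x (x * phi x - x ^ 2 * phi_tail x)).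
  { intros x. assert (D := is_derive_phi_int x).
    unfold P, phi_tail, phi. auto_derive.
    - repeat split; auto. eexists; exact D.
    - replace (Derive (fun y => phi_int y) x) with (phi x) by (symmetry; apply is_derive_unique, D).
      unfold phi. norm_exp (- x ^ 2 / 2). field. }
  assert (Cg : forall x, continuous (fun x => x * phi x - x ^ 2 * phi_tail x) x).
  { intros x. apply continuous_minus_R; apply continuous_mult_R.
    - apply continuous_id.
    - apply continuous_phi.
    - apply ex_derive_continuous_R. auto_derive. auto.
    - apply continuous_minus_R; [apply continuous_const|].
      apply ex_derive_continuous_R. eexists; apply is_derive_phi_int. }
  assert (R : forall b, RInt (fun x => x * phi x - x ^ 2 * phi_tail x) 0 b = P b - P 0).
  { intros b. apply is_RInt_unique, (is_RInt_derive (V := R_CompleteNormedModule) P); auto. }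
  assert (P0 : P 0 = - (1 / 3)).
  { unfold P, phi. replace (- 0 ^ 2 / 2) with 0 by field. rewrite exp_0. field. }
  split; [intros b _; apply ex_RInt_continuous_R; auto|].
  apply is_lim_ext with (fun b => P b - P 0). { intros; symmetry; apply R. }
  replace (Finite (1 / 3)) with (Rbar_minus 0 (P 0)) by (simpl; f_equal; rewrite P0; ring).
  apply is_lim_minus'; [|apply is_lim_const].
  replace (Finite 0) with (Finite (/ 3 * (0 - 0 - 0))) by (f_equal; ring).
  apply (is_lim_ext (fun b => / 3 * (b ^ 2 * phi b - phi b - b ^ 3 * phi_tail b)));
    [intros; unfold P; field|].
  apply (is_lim_scal_l _ (/ 3) p_infty (0 - 0 - 0)).
  apply is_lim_minus'; [apply is_lim_minus'|]; auto using is_lim_sqr_mul_phi, is_lim_phi,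
    is_lim_cube_mul_phi_tail.
Qed.

Lemma J_1_m1 : J 1 (-1) = 1 / 3.
Proof.
  apply (is_RInt2_0inf_unique (J_integrand 1 (-1))); [apply is_RInt2_0inf_J; lra|].
  exists (fun x => x * (phi x - x * phi_tail x)). split.
  - intros x Hx. eapply is_RInt_0inf_ext;
      [|apply (is_RInt_0inf_scal _ x _ (is_RInt_0inf_id_mul_phi_shift x))].
    intros y Hy. destruct Hx as [Hx | <-].
    + unfold J_integrand, quad_form, phi. rewrite !rpow_1 by lra.
      replace (- (x ^ 2 - 2 * -1 * x * y + y ^ 2) / 2) with (- (y + x) ^ 2 / 2) by field. ring.
    + unfold J_integrand. rewrite rpow_eq_0 by lra. ring.
  - eapply is_RInt_0inf_ext; [|apply is_RInt_0inf_J_1_m1_inner]. intros x _. cbv beta. ring.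
Qed.

(** * Back to the Gaussian vector *)

Lemma has_integral_0inf_of_is_RInt_0inf f l : is_RInt_0inf f l -> has_integral_0inf f l.
Proof.
  intros [A B]. split.
  - intros b Hb. constructor. apply ex_RInt_Reals_0. auto.
  - intros eps Heps. rewrite is_lim_pinfty_eps in B. destruct (B eps Heps) as [M HM].
    exists (M + 1). intros b pr Hb. rewrite <- RInt_Reals. apply HM. lra.
Qed.

Lemma has_integral2_0inf_of_is_RInt2_0inf F L : is_RInt2_0inf F L -> has_integral2_0inf F L.
Proof.
  intros [g [A B]]. exists g.
  split; [intros; apply has_integral_0inf_of_is_RInt_0inf; auto |
          apply has_integral_0inf_of_is_RInt_0inf; auto].
Qed.

Lemma has_integral_R_of_is_RInt_0inf f l :
  is_RInt_0inf f l -> (forall x, x < 0 -> f x = 0) -> has_integral_R f l.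
Proof.
  intros H H0. exists l, 0. split; [|split; [|ring]]; apply has_integral_0inf_of_is_RInt_0inf; auto.
  apply is_RInt_0inf_0. intros; apply H0; lra.
Qed.

Lemma has_integral_R_of_is_RInt_0inf_opp f l :
  is_RInt_0inf (fun x => f (- x)) l -> (forall x, 0 < x -> f x = 0) -> has_integral_R f l.
Proof.
  intros H H0. exists 0, l. split; [|split; [|ring]]; apply has_integral_0inf_of_is_RInt_0inf; auto.
  apply is_RInt_0inf_0. auto.
Qed.

Lemma has_integral2_R_of_is_RInt2_0inf F L : is_RInt2_0inf F L ->
  (forall x y, x < 0 -> F x y = 0) -> (forall x y, y < 0 -> F x y = 0) -> has_integral2_R F L.
Proof.
  intros [g [A B]] Hx Hy. exists (fun x => if Rle_dec 0 x then g x else 0). split.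
  - intros x. destruct (Rle_dec 0 x).
    + apply has_integral_R_of_is_RInt_0inf; auto.
    + apply has_integral_R_of_is_RInt_0inf; [apply is_RInt_0inf_0|]; intros; apply Hx; lra.
  - apply has_integral_R_of_is_RInt_0inf.
    + eapply is_RInt_0inf_ext; [|exact B]. intros x Hx0. destruct (Rle_dec 0 x); auto; lra.
    + intros x Hx0. destruct (Rle_dec 0 x); auto; lra.
Qed.

Lemma has_integral2_R_of_is_RInt2_0inf_opp F L : is_RInt2_0inf (fun x y => F x (- y)) L ->
  (forall x y, x < 0 -> F x y = 0) -> (forall x y, 0 < y -> F x y = 0) -> has_integral2_R F L.
Proof.
  intros [g [A B]] Hx Hy. exists (fun x => if Rle_dec 0 x then g x else 0). split.
  - intros x. destruct (Rle_dec 0 x).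
    + apply has_integral_R_of_is_RInt_0inf_opp; auto.
    + apply has_integral_R_of_is_RInt_0inf; [apply is_RInt_0inf_0|]; intros; apply Hx; lra.
  - apply has_integral_R_of_is_RInt_0inf.
    + eapply is_RInt_0inf_ext; [|exact B]. intros x Hx0. destruct (Rle_dec 0 x); auto; lra.
    + intros x Hx0. destruct (Rle_dec 0 x); auto; lra.
Qed.

Lemma limit1_in_of_Rabs_le (f : R -> R) (D : R -> Prop) a l K :
  (forall c, D c -> Rabs (c - a) < 1 -> Rabs (f c - l) <= K * Rabs (c - a)) ->
  limit1_in f D l a.
Proof.
  intros H eps Heps. set (K' := Rabs K + 1). assert (HK' : 0 < K') by (unfold K'; generalize (Rabs_pos K); lra).
  exists (Rmin 1 (eps / K')). split; [apply Rmin_pos; [lra | apply Rdiv_lt_0_compat; lra]|].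
  intros c [Hc Hd]. simpl in *. unfold R_dist in *.
  assert (Hd1 := Rlt_le_trans _ _ _ Hd (Rmin_l 1 (eps / K'))).
  assert (Hd2 := Rlt_le_trans _ _ _ Hd (Rmin_r 1 (eps / K'))).
  eapply Rle_lt_trans; [apply H; auto|].
  apply Rle_lt_trans with (K' * Rabs (c - a)).
  - apply Rmult_le_compat_r; [apply Rabs_pos|]. unfold K'. generalize (Rle_abs K). lra.
  - apply Rmult_lt_compat_l with (r := K') in Hd2; auto.
    replace (K' * (eps / K')) with eps in Hd2 by (field; lra). exact Hd2.
Qed.

Lemma posp_scal t u : 0 < t -> posp (t * u) = t * posp u.
Proof.
  intros Ht. unfold posp, Rmax. destruct (Rle_dec 0 (t * u)); destruct (Rle_dec 0 u); try ring; nra.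
Qed.

Lemma posp_eq u : 0 < u -> posp u = u.
Proof. intros H. unfold posp. rewrite Rmax_right; lra. Qed.

Lemma posp_eq_0 u : u <= 0 -> posp u = 0.
Proof. intros H. unfold posp. rewrite Rmax_left; lra. Qed.

Lemma rpow_posp_mul_eq r u v : rpow (posp u * posp v) r = rpow u r * rpow v r.
Proof.
  destruct (Rle_dec u 0) as [Hu|Hu].
  { rewrite (posp_eq_0 u), Rmult_0_l, (rpow_eq_0 0), (rpow_eq_0 u) by lra. ring. }
  destruct (Rle_dec v 0) as [Hv|Hv].
  { rewrite (posp_eq_0 v), Rmult_0_r, (rpow_eq_0 0), (rpow_eq_0 v) by lra. ring. }
  rewrite !posp_eq, !rpow_eq_Rpower by (try apply Rmult_lt_0_compat; lra).
  symmetry. apply Rpower_mult_distr; lra.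
Qed.

Lemma detVar_gt_0 s c : 0 < s -> -1 < c < 1 -> 0 < detVar s c.
Proof.
  intros Hs Hc. unfold detVar. replace (s ^ 4 - (c * s ^ 2) ^ 2) with (s ^ 4 * (1 - c ^ 2)) by ring.
  apply Rmult_lt_0_compat; [apply pow_lt; auto | nra].
Qed.

Lemma gauss_density_opp s c x y : gauss_density s c x (- y) = gauss_density s (- c) x y.
Proof.
  unfold gauss_density, detVar.
  replace ((- c * s ^ 2) ^ 2) with ((c * s ^ 2) ^ 2) by ring.
  replace (s ^ 2 * x ^ 2 - 2 * c * s ^ 2 * x * - y + s ^ 2 * (- y) ^ 2)
    with (s ^ 2 * x ^ 2 - 2 * - c * s ^ 2 * x * y + s ^ 2 * y ^ 2) by ring.
  reflexivity.
Qed.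

(* The change of variables (x, y) = t (u, v) normalising the Gaussian to the form [quad_form c]. *)
Definition gauss_scale (s c : R) : R := sqrt (detVar s c) / s.

Definition moment_factor (r s c : R) : R :=
  gauss_scale s c * gauss_scale s c
  * (Rpower (gauss_scale s c) (2 * r) / (2 * PI * sqrt (detVar s c))).

Lemma gauss_scale_gt_0 s c : 0 < s -> -1 < c < 1 -> 0 < gauss_scale s c.
Proof.
  intros Hs Hc. apply Rdiv_lt_0_compat; auto. apply sqrt_lt_R0, detVar_gt_0; auto.
Qed.

Lemma moment_integrand_scal r s c u v : 0 < s -> -1 < c < 1 ->
  rpow (posp (gauss_scale s c * u) * posp (gauss_scale s c * v)) r
  * gauss_density s c (gauss_scale s c * u) (gauss_scale s c * v)
  = Rpower (gauss_scale s c) (2 * r) / (2 * PI * sqrt (detVar s c)) * J_integrand r c u v.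
Proof.
  intros Hs Hc. set (t := gauss_scale s c). set (D := detVar s c).
  assert (HD : 0 < D) by (apply detVar_gt_0; auto).
  assert (Ht : 0 < t) by (apply gauss_scale_gt_0; auto).
  assert (Est : s ^ 2 * t ^ 2 = D).
  { unfold t, gauss_scale. fold D.
    replace (s ^ 2 * (sqrt D / s) ^ 2) with (sqrt D * sqrt D) by (field; lra).
    apply sqrt_sqrt; lra. }
  assert (Hp : rpow (posp (t * u) * posp (t * v)) r = Rpower t (2 * r) * (rpow u r * rpow v r)).
  { rewrite !posp_scal, <- rpow_posp_mul_eq by auto.
    replace (t * posp u * (t * posp v)) with ((t * t) * (posp u * posp v)) by ring.
    assert (0 < t * t) by nra.
    destruct (Rle_dec (posp u * posp v) 0).
    - rewrite !rpow_eq_0 by nra. ring.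
    - rewrite !rpow_eq_Rpower, <- Rpower_mult_distr by nra. f_equal.
      rewrite <- Rpower_mult_distr, <- Rpower_plus by lra. f_equal. ring. }
  rewrite Hp. unfold J_integrand, gauss_density. fold D.
  replace (- (s ^ 2 * (t * u) ^ 2 - 2 * c * s ^ 2 * (t * u) * (t * v) + s ^ 2 * (t * v) ^ 2)
             / (2 * D)) with (- quad_form c u v / 2).
  - unfold Rdiv. ring.
  - replace (- (s ^ 2 * (t * u) ^ 2 - 2 * c * s ^ 2 * (t * u) * (t * v) + s ^ 2 * (t * v) ^ 2)
               / (2 * D)) with (- (s ^ 2 * t ^ 2) * quad_form c u v / (2 * D))
      by (unfold quad_form; field; lra).
    rewrite Est. field. lra.
Qed.

Lemma moment_factor_eq r s c : 0 < s -> -1 < c < 1 ->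
  moment_factor r s c
  = Rpower s (- 2 * (1 + r)) * Rpower (detVar s c) ((2 * r + 1) / 2) / (2 * PI).
Proof.
  intros Hs Hc. unfold moment_factor, gauss_scale. set (D := detVar s c).
  assert (HD : 0 < D) by (apply detVar_gt_0; auto).
  assert (EsD : sqrt D = exp (/ 2 * ln D)) by (rewrite <- Rpower_sqrt by auto; reflexivity).
  assert (Et : sqrt D / s = exp (/ 2 * ln D - ln s)).
  { rewrite EsD. unfold Rminus. rewrite exp_plus, exp_Ropp, exp_ln by auto. reflexivity. }
  unfold Rpower. rewrite Et, ln_exp, EsD.
  assert (0 < exp (/ 2 * ln D)) by apply exp_pos. assert (0 < PI) by apply PI_RGT_0.
  replace (/ 2 * ln D - ln s) with (- ln s + / 2 * ln D) by ring.
  replace ((2 * r + 1) / 2 * ln D) with (r * ln D + / 2 * ln D) by field.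
  replace (- 2 * (1 + r) * ln s) with (- ln s + - ln s + r * (- ln s + - ln s)) by ring.
  rewrite !exp_plus. replace (2 * r * (- ln s + / 2 * ln D)) with (r * (- ln s + - ln s) + r * ln D)
    by field.
  rewrite exp_plus. field. lra.
Qed.

Lemma moment_factor_1 s c : 0 < s -> -1 < c < 1 ->
  moment_factor 1 s c = s ^ 2 * ((1 - c ^ 2) * sqrt (1 - c ^ 2)) / (2 * PI).
Proof.
  intros Hs Hc. rewrite moment_factor_eq by auto.
  set (d := 1 - c ^ 2). assert (Hd : 0 < d) by (unfold d; nra).
  replace (detVar s c) with (s ^ 4 * d) by (unfold detVar, d; ring).
  assert (Hs4 : 0 < s ^ 4) by (apply pow_lt; auto).
  replace ((2 * 1 + 1) / 2) with (1 + / 2) by field.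
  rewrite Rpower_plus, Rpower_1, Rpower_sqrt by (apply Rmult_lt_0_compat; auto).
  replace (- 2 * (1 + 1)) with (- INR 4) by (simpl; ring). rewrite Rpower_Ropp, Rpower_pow by auto.
  rewrite sqrt_mult by lra. replace (s ^ 4) with (s ^ 2 * s ^ 2) by ring.
  rewrite sqrt_square by apply pow2_ge_0.
  field. split; [generalize PI_RGT_0 |]; lra.
Qed.

Lemma is_RInt2_0inf_pos_moment r s c : 0 < r -> 0 < s -> -1 < c < 1 ->
  is_RInt2_0inf (fun x y => rpow (posp x * posp y) r * gauss_density s c x y)
                (moment_factor r s c * J r c).
Proof.
  intros Hr Hs Hc. unfold moment_factor. set (t := gauss_scale s c).
  assert (Ht : 0 < t) by (apply gauss_scale_gt_0; auto).
  replace (t * t * (Rpower t (2 * r) / (2 * PI * sqrt (detVar s c))) * J r c)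
    with (t * t * (Rpower t (2 * r) / (2 * PI * sqrt (detVar s c)) * J r c)) by ring.
  apply is_RInt2_0inf_comp_scal; auto.
  eapply is_RInt2_0inf_ext; [|apply is_RInt2_0inf_scal, is_RInt2_0inf_J; lra].
  intros x y _ _. symmetry. apply (moment_integrand_scal r s c x y Hs Hc).
Qed.

Lemma is_RInt2_0inf_K_integrand r : 0 < r ->
  is_RInt2_0inf (K_integrand r) (J r (-1) / (2 * PI)).
Proof.
  intros Hr. replace (J r (-1) / (2 * PI)) with (/ (2 * PI) * J r (-1)) by (unfold Rdiv; ring).
  eapply is_RInt2_0inf_ext; [|apply is_RInt2_0inf_scal, is_RInt2_0inf_J; lra].
  intros x y _ _. unfold K_integrand, J_integrand, quad_form. f_equal. f_equal. f_equal. field.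
Qed.

Lemma J_ratio_limit r : 0 < r -> limit1_in (fun c => J r c / J r (-1)) corr_domain 1 (-1).
Proof.
  intros Hr. assert (HJ := J_gt_0 r (-1) Hr ltac:(lra)).
  destruct (J_sub_J_m1_le r Hr) as [C [HC0 HC]].
  apply limit1_in_of_Rabs_le with (C / J r (-1)). intros c Hc Hd.
  replace (c - -1) with (1 + c) in * by ring.
  destruct Hc. rewrite Rabs_right in Hd by lra. rewrite (Rabs_right (1 + c)) by lra.
  replace (J r c / J r (-1) - 1) with ((J r c - J r (-1)) / J r (-1)) by (field; lra).
  unfold Rdiv. rewrite Rabs_mult, (Rabs_right (/ J r (-1))) by (left; apply Rinv_0_lt_compat; auto).
  assert (0 < / J r (-1)) by (apply Rinv_0_lt_compat; auto).
  apply Rle_trans with ((1 + c) * C * / J r (-1)); [|right; ring].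
  apply Rmult_le_compat_r; [lra | apply HC; lra].
Qed.

(* With d = 1 - c^2 and J_1(-c) = J_1(c) - c pi / d^(3/2), the normalised E(X^+ Y^-) is
   1 + d^(3/2) J_1(c) / pi - (1 + c), and d^(3/2) <= 2 (1 + c). *)
Lemma neg_moment_ratio_limit s : 0 < s ->
  limit1_in (fun c => moment_factor 1 s (- c) * J 1 (- c) / (s ^ 2 / 2)) corr_domain 1 (-1).
Proof.
  intros Hs. destruct (J_sub_J_m1_le 1 Rlt_0_1) as [C [HC0 HC]].
  set (M := Rabs (J 1 (-1)) + C). assert (HPI := PI_RGT_0).
  apply limit1_in_of_Rabs_le with (2 * M / PI + 1). intros c Hc Hd.
  replace (c - -1) with (1 + c) in * by ring.
  destruct Hc as [Hc1 Hc2]. rewrite Rabs_right in Hd by lra. rewrite (Rabs_right (1 + c)) by lra.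
  set (d := 1 - c ^ 2). assert (Hdp : 0 < d) by (unfold d; nra).
  assert (Hsd : 0 < sqrt d) by (apply sqrt_lt_R0; auto).
  assert (Hsd1 : sqrt d <= 1) by (rewrite <- sqrt_1; apply sqrt_le_1_alt; unfold d; nra).
  assert (Hs2 : 0 < s ^ 2) by (apply pow_lt; lra).
  rewrite moment_factor_1 by lra. replace ((- c) ^ 2) with (c ^ 2) by ring. fold d.
  assert (JD := J_1_sub_J_1_opp c ltac:(lra)). fold d in JD.
  replace (J 1 (- c)) with (J 1 c - c * PI / (d * sqrt d)) by lra.
  replace (s ^ 2 * (d * sqrt d) / (2 * PI) * (J 1 c - c * PI / (d * sqrt d)) / (s ^ 2 / 2) - 1)
    with (d * sqrt d * J 1 c / PI - (1 + c)) by (field; repeat split; nra).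
  assert (BJ : Rabs (J 1 c) <= M).
  { assert (B := HC c ltac:(lra)). unfold M.
    replace (J 1 c) with (J 1 (-1) + (J 1 c - J 1 (-1))) by ring.
    eapply Rle_trans; [apply Rabs_triang|]. nra. }
  assert (Hdd : d * sqrt d <= 2 * (1 + c)).
  { apply Rle_trans with (d * 1); [apply Rmult_le_compat_l; lra | unfold d; nra]. }
  eapply Rle_trans; [apply Rabs_triang|]. rewrite Rabs_Ropp, (Rabs_right (1 + c)) by lra.
  assert (Habs : Rabs (d * sqrt d * J 1 c / PI) <= 2 * (1 + c) * M / PI).
  { unfold Rdiv. rewrite !Rabs_mult, (Rabs_right d), (Rabs_right (sqrt d)),
      (Rabs_right (/ PI)) by (try apply Rle_ge; try (left; apply Rinv_0_lt_compat); lra).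
    apply Rmult_le_compat_r; [left; apply Rinv_0_lt_compat; lra|].
    apply Rmult_le_compat; auto; [apply Rmult_le_pos; lra | apply Rabs_pos]. }
  replace (2 * (1 + c) * M / PI) with ((1 + c) * (2 * M / PI)) in Habs by (field; lra). nra.
Qed.

Lemma limit1_in_ext (f g : R -> R) (D : R -> Prop) l a :
  (forall c, D c -> f c = g c) -> limit1_in g D l a -> limit1_in f D l a.
Proof.
  intros H Hg eps Heps. destruct (Hg eps Heps) as [d [Hd Hgd]].
  exists d. split; auto. intros x [Hx Hxd]. rewrite H; auto.
Qed.

Lemma pos_moment_integral r s c : 0 < r -> 0 < s -> corr_domain c ->
  has_integral2_R (fun x y => rpow (posp x * posp y) r * gauss_density s c x y)
                  (moment_factor r s c * J r c).
Proof.
  intros Hr Hs Hc. apply has_integral2_R_of_is_RInt2_0inf; [apply is_RInt2_0inf_pos_moment; auto| |].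
  - intros x y Hx. rewrite (posp_eq_0 x), Rmult_0_l, rpow_eq_0 by lra. ring.
  - intros x y Hy. rewrite (posp_eq_0 y), Rmult_0_r, rpow_eq_0 by lra. ring.
Qed.

Lemma pos_moment_ratio_limit r s : 0 < r -> 0 < s ->
  limit1_in (fun c => moment_factor r s c * J r c
                      / (J r (-1) / (2 * PI) * Rpower s (- 2 * (1 + r))
                         * Rpower (detVar s c) ((2 * r + 1) / 2)))
            corr_domain 1 (-1).
Proof.
  intros Hr Hs. apply limit1_in_ext with (fun c => J r c / J r (-1)); [|apply J_ratio_limit; auto].
  intros c Hc. rewrite moment_factor_eq by auto.
  assert (HJ := J_gt_0 r (-1) Hr ltac:(lra)). assert (HPI := PI_RGT_0).
  assert (0 < Rpower s (- 2 * (1 + r))) by apply exp_pos.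
  assert (0 < Rpower (detVar s c) ((2 * r + 1) / 2)) by apply exp_pos.
  field. repeat split; lra.
Qed.

Lemma neg_moment_integral s c : 0 < s -> corr_domain c ->
  has_integral2_R (fun x y => posp x * negp y * gauss_density s c x y)
                  (moment_factor 1 s (- c) * J 1 (- c)).
Proof.
  intros Hs Hc. apply has_integral2_R_of_is_RInt2_0inf_opp.
  - eapply is_RInt2_0inf_ext; [|apply (is_RInt2_0inf_pos_moment 1 s (- c)); unfold corr_domain in *; lra].
    intros x y Hx Hy. rewrite gauss_density_opp, rpow_1
      by (apply Rmult_le_pos; apply Rmax_l).
    unfold negp. rewrite Rmin_right, Ropp_involutive, (posp_eq y) by lra. reflexivity.
  - intros x y Hx. rewrite posp_eq_0 by lra. ring.
  - intros x y Hy. unfold negp. rewrite Rmin_left by lra. ring.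
Qed.

Theorem lemma6 :
  (forall r sigma : R, r > 0 -> sigma > 0 ->
     exists K : R,
       has_integral2_0inf (K_integrand r) K /\
       exists E : R -> R,
         (forall c, corr_domain c ->
            has_integral2_R
              (fun x y => rpow (posp x * posp y) r * gauss_density sigma c x y) (E c)) /\
         limit1_in
           (fun c => E c / (K * Rpower sigma (- 2 * (1 + r))
                             * Rpower (detVar sigma c) ((2 * r + 1) / 2)))
           corr_domain 1 (-1)) /\
  has_integral2_0inf (K_integrand 1) (/ (6 * PI)) /\
  (forall sigma : R, sigma > 0 ->
     exists E : R -> R,
       (forall c, corr_domain c ->
          has_integral2_R (fun x y => posp x * negp y * gauss_density sigma c x y) (E c)) /\
       limit1_in (fun c => E c / (sigma ^ 2 / 2)) corr_domain 1 (-1)).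
Proof.
  split; [|split].
  - intros r s Hr Hs. exists (J r (-1) / (2 * PI)).
    split; [apply has_integral2_0inf_of_is_RInt2_0inf, is_RInt2_0inf_K_integrand; auto|].
    exists (fun c => moment_factor r s c * J r c).
    split; [intros; apply pos_moment_integral; auto | apply pos_moment_ratio_limit; auto].
  - apply has_integral2_0inf_of_is_RInt2_0inf.
    replace (/ (6 * PI)) with (J 1 (-1) / (2 * PI))
      by (rewrite J_1_m1; field; generalize PI_RGT_0; lra).
    apply is_RInt2_0inf_K_integrand; lra.
  - intros s Hs. exists (fun c => moment_factor 1 s (- c) * J 1 (- c)).
    split; [intros; apply neg_moment_integral; auto | apply neg_moment_ratio_limit; auto].
Qed.
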